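(* Fix $\mu\in(0,\mu_0]$ and suppose there are constants $p\ge0$, $\rho>0$ with $|f(\xi)-f'(0)\xi|\le p|\xi|^2$ for all $|\xi|\le\rho$, and that $\mu\sup_{t\ge0}|\Delta\tilde\varphi(t)|<\frac{1}{8h_{\max}(\mu)}$ and $\mu(|\Delta\tilde\beta|\mu+|\Delta\alpha|)<\frac{1}{8h_{\max}(\mu)}$. Then the zero solution of $$\bar y''+(\alpha+\Delta\alpha)\mu\bar y'+\big((\beta+\Delta\beta)\mu^2+\mu(\varphi(t)+\Delta\varphi(t))\big)f(\bar y)=0$$ is asymptotically stable.
   Context: Let $T>0$, $\alpha>0$, $\beta>0$ be constants, $\varphi:\mathbb{R}\to\mathbb{R}$ a continuous $T$-periodic function with $\int_0^T\varphi(s)\,ds=0$, and $f:\mathbb{R}\to\mathbb{R}$ a smooth function with $f(0)=0$ and $f'(0)<0$. Put $\tilde\beta=\beta f'(0)$, $\tilde\varphi(t)=\varphi(t)f'(0)$, and assume $$\frac{1}{T}\int_0^T\Big(\int_0^\tau\tilde\varphi(s)\,ds\Big)^2d\tau>\Big(\frac{1}{T}\int_0^T\tau\,\tilde\varphi(\tau)\,d\tau\Big)^2-\tilde\beta .$$ For $\mu>0$ let $\tilde A(t,\mu)=\begin{pmatrix}0&1\\-\tilde\beta\mu^2-\mu\tilde\varphi(t)&-\alpha\mu\end{pmatrix}$. Let $\mu_0>0$ be a number such that the zero solution of the linear equation $y''+\alpha\mu y'+(\tilde\beta\mu^2+\mu\tilde\varphi(t))y=0$ is asymptotically stable for every $\mu\in(0,\mu_0]$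 (such a number exists). For fixed $\mu\in(0,\mu_0]$ let $H(t,\mu)$ be a Hermitian solution of $\frac{d}{dt}H+H\tilde A(t,\mu)+\tilde A^*(t,\mu)H=-I$ on $[0,T]$ with $H(0,\mu)=H(T,\mu)>0$, extended $T$-periodically to $[0,\infty)$; $h_{\max}(\mu)=\max_{0\le t\le T}\|H(t,\mu)\|$. The perturbations are real constants $\Delta\alpha,\Delta\beta$ and a bounded continuous function $\Delta\varphi$ on $[0,\infty)$; set $\Delta\tilde\beta=\Delta\beta\,f'(0)$, $\Delta\tilde\varphi(t)=\Delta\varphi(t)f'(0)$. $\|\cdot\|$ is the Euclidean norm / spectral matrix norm. Asymptotic stability is in the Lyapunov sense for the equivalent first-order system in $(\bar y,\bar y')$. *)

From Stdlib Require Import Reals Lra.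
From Coquelicot Require Export Coquelicot.
Open Scope R_scope.

Record M2 := mkM2 { m11 : C; m12 : C; m21 : C; m22 : C }.

Definition Madd (A B : M2) : M2 :=
  mkM2 (Cplus (m11 A) (m11 B)) (Cplus (m12 A) (m12 B))
       (Cplus (m21 A) (m21 B)) (Cplus (m22 A) (m22 B)).
Definition Mopp (A : M2) : M2 :=
  mkM2 (Copp (m11 A)) (Copp (m12 A)) (Copp (m21 A)) (Copp (m22 A)).
Definition Mmul (A B : M2) : M2 :=
  mkM2 (Cplus (Cmult (m11 A) (m11 B)) (Cmult (m12 A) (m21 B)))
       (Cplus (Cmult (m11 A) (m12 B)) (Cmult (m12 A) (m22 B)))
       (Cplus (Cmult (m21 A) (m11 B)) (Cmult (m22 A) (m21 B)))
       (Cplus (Cmult (m21 A) (m12 B)) (Cmult (m22 A) (m22 B))).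
Definition Madj (A : M2) : M2 :=
  mkM2 (Cconj (m11 A)) (Cconj (m21 A)) (Cconj (m12 A)) (Cconj (m22 A)).
Definition MI : M2 := mkM2 (RtoC 1) (RtoC 0) (RtoC 0) (RtoC 1).

Definition Mvec (A : M2) (z : C * C) : C * C :=
  (Cplus (Cmult (m11 A) (fst z)) (Cmult (m12 A) (snd z)),
   Cplus (Cmult (m21 A) (fst z)) (Cmult (m22 A) (snd z))).

Definition vnorm (z : C * C) : R := sqrt (Cmod (fst z) ^ 2 + Cmod (snd z) ^ 2).

Definition opnorm (A : M2) : R :=
  real (Lub_Rbar (fun r => exists z, vnorm z = 1 /\ r = vnorm (Mvec A z))).

Definition hermitian (A : M2) : Prop := Madj A = A.

Definition posdef (A : M2) : Prop :=
  hermitian A /\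
  forall z : C * C, z <> (RtoC 0, RtoC 0) ->
    0 < Re (Cplus (Cmult (Cconj (fst z)) (fst (Mvec A z)))
                  (Cmult (Cconj (snd z)) (snd (Mvec A z)))).

Definition C_derive (h : R -> C) (t : R) (d : C) : Prop :=
  is_derive (fun s => Re (h s)) t (Re d) /\ is_derive (fun s => Im (h s)) t (Im d).
Definition M_derive (H : R -> M2) (t : R) (D : M2) : Prop :=
  C_derive (fun s => m11 (H s)) t (m11 D) /\ C_derive (fun s => m12 (H s)) t (m12 D) /\
  C_derive (fun s => m21 (H s)) t (m21 D) /\ C_derive (fun s => m22 (H s)) t (m22 D).

(* btil = beta f'(0), phitil t = phi t * f'(0) *)
Definition Atil (alpha btil : R) (phitil : R -> R) (mu t : R) : M2 :=
  mkM2 (RtoC 0) (RtoC 1) (RtoC (- btil * mu ^ 2 - mu * phitil t)) (RtoC (- alpha * mu)).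

Definition lyap_periodic_sol (T alpha btil : R) (phitil : R -> R) (mu : R)
    (H : R -> M2) : Prop :=
  (forall t, 0 <= t <= T ->
     hermitian (H t) /\
     M_derive H t (Madd (Mopp MI)
                   (Mopp (Madd (Mmul (H t) (Atil alpha btil phitil mu t))
                               (Mmul (Madj (Atil alpha btil phitil mu t)) (H t)))))) /\
  H 0 = H T /\ posdef (H 0).

(* h_max = max_{0<=t<=T} ||H(t)|| (the max is attained, so it equals the sup) *)
Definition hmax (T : R) (H : R -> M2) : R :=
  real (Lub_Rbar (fun r => exists t, 0 <= t <= T /\ r = opnorm (H t))).

Definition is_sol (a : R) (q g : R -> R) (t0 : R) (t1 : Rbar) (y v : R -> R) : Prop :=
  forall t, t0 <= t -> Rbar_lt t t1 ->
    is_derive y t (v t) /\ is_derive v t (- a * v t - q t * g (y t)).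

Definition snorm (y v : R) : R := sqrt (y ^ 2 + v ^ 2).

Definition zero_stable (a : R) (q g : R -> R) : Prop :=
  forall t0, 0 <= t0 -> forall eps, 0 < eps -> exists delta, 0 < delta /\
    (forall y0 v0, snorm y0 v0 < delta ->
       exists y v, is_sol a q g t0 p_infty y v /\ y t0 = y0 /\ v t0 = v0) /\
    (forall (t1 : Rbar) y v, is_sol a q g t0 t1 y v -> snorm (y t0) (v t0) < delta ->
       forall t, t0 <= t -> Rbar_lt t t1 -> snorm (y t) (v t) < eps).

Definition zero_attractive (a : R) (q g : R -> R) : Prop :=
  forall t0, 0 <= t0 -> exists delta, 0 < delta /\
    forall y v, is_sol a q g t0 p_infty y v -> snorm (y t0) (v t0) < delta ->
      is_lim (fun t => snorm (y t) (v t)) p_infty 0.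

Definition zero_asympt_stable (a : R) (q g : R -> R) : Prop :=
  zero_stable a q g /\ zero_attractive a q g.

From Pilot Require Import Defs.
From Stdlib Require Import Reals Lra Lia ZArith.
From Coquelicot Require Import Coquelicot.
Open Scope R_scope.

(* Write the equation as a first-order system for [z = (y, y')].  Extended periodically, the
   solution [H] of the Lyapunov equation of the linearised system gives a quadratic form
   [V t z = z^T H(t) z] with [lam |z|^2 <= V <= h_max |z|^2], where [lam > 0] comes from
   [H(0) > 0] transported along the linear flow.  Along the perturbed nonlinear equation
   [dV/dt = - |z|^2 + 2 (H z)_2 E], where [E] collects the perturbations of the coefficients and
   the quadratic remainder of [f]; the smallness hypotheses give
   [|2 (H z)_2 E| <= (1/2 + O(|z|)) |z|^2].  Hence [exp (c t) V] is nonincreasing as long as [z]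
   stays in a small ball, and a barrier argument shows that it never leaves it.  Global existence
   follows from Picard iteration for [f] truncated outside [[-rho, rho]]. *)

Lemma real_Lub_Rbar_ub (E : R -> Prop) x :
  E x -> (exists B, forall y, E y -> y <= B) -> x <= real (Lub_Rbar E).
Proof.
  intros Ex [B HB]. destruct (Lub_Rbar_correct E) as [Hub Hlub].
  destruct (Lub_Rbar E) as [l| |]; simpl.
  - exact (Hub x Ex).
  - destruct (Hlub (Finite B) HB).
  - destruct (Hub x Ex).
Qed.

(* Without a finite bound, [real (Lub_Rbar E)] is the junk value [0]. *)
Lemma real_Lub_Rbar_ub_or_0 (E : R -> Prop) x :
  E x -> x <= real (Lub_Rbar E) \/ real (Lub_Rbar E) = 0.
Proof.
  intros Ex. destruct (Lub_Rbar_correct E) as [Hub _].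
  destruct (Lub_Rbar E) as [l| |]; simpl; auto.
  left; exact (Hub x Ex).
Qed.

Lemma Rabs_sub_triang x y z : Rabs (x - y) <= Rabs (x - z) + Rabs (z - y).
Proof. exact (Rdist_tri x y z). Qed.

Lemma Rabs_sub_le_between a b s : Rmin a b <= s <= Rmax a b -> Rabs (s - a) <= Rabs (b - a).
Proof. unfold Rmin, Rmax. intros Hs. destruct (Rle_dec a b); unfold Rabs; repeat destruct Rcase_abs; lra. Qed.

Lemma pow2_sum_ge0 y v : 0 <= y ^ 2 + v ^ 2.
Proof. pose proof (pow2_ge_0 y); pose proof (pow2_ge_0 v); lra. Qed.

Lemma Rabs_le_of_pow2_le x N : x ^ 2 <= N ^ 2 -> 0 <= N -> Rabs x <= N.
Proof.
  intros Hx HN. apply Rsqr_incr_0_var; [|exact HN].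
  rewrite <- Rsqr_abs, !Rsqr_pow2. exact Hx.
Qed.

Lemma exp_ge1 x : 0 <= x -> 1 <= exp x.
Proof. intros Hx. rewrite <- exp_0. destruct Hx as [Hx|<-]; [left; apply exp_increasing|]; lra. Qed.

(* Coquelicot's generic lemmas, specialised to [R -> R] so that [apply] and [auto] unify. *)
Lemma continuousR_plus (f g : R -> R) x :
  continuous f x -> continuous g x -> continuous (fun t => f t + g t) x.
Proof. exact (continuous_plus f g x). Qed.

Lemma continuousR_mult (f g : R -> R) x :
  continuous f x -> continuous g x -> continuous (fun t => f t * g t) x.
Proof. exact (@continuous_mult R_UniformSpace R_AbsRing f g x). Qed.

Lemma continuousR_opp (f : R -> R) x : continuous f x -> continuous (fun t => - f t) x.
Proof. exact (continuous_opp f x). Qed.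

Lemma continuousR_minus (f g : R -> R) x :
  continuous f x -> continuous g x -> continuous (fun t => f t - g t) x.
Proof. intros; apply continuousR_plus, continuousR_opp; auto. Qed.

Lemma continuousR_comp (f g : R -> R) x :
  continuous f x -> continuous g (f x) -> continuous (fun t => g (f t)) x.
Proof. exact (continuous_comp f g x). Qed.

Lemma continuousR_const (c x : R) : continuous (fun _ : R => c) x.
Proof. apply continuous_const. Qed.

Lemma continuousR_of_derive (f : R -> R) x : ex_derive f x -> continuous f x.
Proof. exact (@ex_derive_continuous R_AbsRing R_NormedModule f x). Qed.

Lemma continuity_pt_of_continuous (f : R -> R) x : continuous f x -> continuity_pt f x.
Proof. apply continuity_pt_filterlim. Qed.

Lemma continuous_of_continuity_pt (f : R -> R) x : continuity_pt f x -> continuous f x.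
Proof. apply continuity_pt_filterlim. Qed.

#[local] Hint Resolve continuousR_plus continuousR_mult continuousR_opp continuousR_minus
  continuousR_const continuous_id continuous_Rabs_comp : continuityR.

Lemma continuity_pt_near (g : R -> R) x eps : continuity_pt g x -> 0 < eps ->
  exists d, 0 < d /\ forall y, Rabs (y - x) < d -> Rabs (g y - g x) < eps.
Proof.
  intros Hc He. destruct (proj1 (continuity_pt_locally g x) Hc (mkposreal _ He)) as [d Hd].
  exists d. split; [apply cond_pos|]. intros y Hy. exact (Hd y Hy).
Qed.

Lemma continuous_lipschitz (g : R -> R) L :
  (forall x y, Rabs (g x - g y) <= L * Rabs (x - y)) -> forall x, continuous g x.
Proof.
  intros HL x. apply continuous_of_continuity_pt, continuity_pt_locally. intros eps.
  pose proof (cond_pos eps). pose proof (Rabs_pos L). pose proof (Rle_abs L).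
  assert (Hd : 0 < eps / (Rabs L + 1)) by (apply Rdiv_lt_0_compat; lra).
  exists (mkposreal _ Hd). intros u Hu. change (Rabs (u - x) < eps / (Rabs L + 1)) in Hu.
  change (Rabs (g u - g x) < eps). pose proof (HL u x). pose proof (Rabs_pos (u - x)).
  assert (Rabs L * Rabs (u - x) <= Rabs L * (eps / (Rabs L + 1))) by nra.
  assert (Rabs L * (eps / (Rabs L + 1)) < eps).
  { apply (Rmult_lt_reg_r (Rabs L + 1)); [lra|]. field_simplify; nra. }
  nra.
Qed.

(** * A barrier principle *)

Lemma first_crossing (g : R -> R) a b l :
  a <= b -> (forall x, a <= x <= b -> continuity_pt g x) -> g a < l < g b ->
  exists s, a < s <= b /\ g s = l /\ forall u, a <= u < s -> g u < l.
Proof.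
  intros Hab Hc Hl.
  set (E := fun s => a <= s <= b /\ forall u, a <= u <= s -> g u < l).
  assert (HaE : E a) by (split; [lra|]; intros u Hu; replace u with a by lra; lra).
  destruct (completeness E) as [s [Hub Hlub]].
  { exists b. intros x [Hx _]. lra. }
  { exists a. exact HaE. }
  assert (Has : a <= s) by (apply Hub, HaE).
  assert (Hsb : s <= b) by (apply Hlub; intros x [Hx _]; lra).
  assert (Hbelow : forall u, a <= u < s -> g u < l).
  { intros u Hu. destruct (Rlt_le_dec (g u) l) as [ok|Hge]; [exact ok|exfalso].
    enough (s <= u) by lra. apply Hlub. intros x [Hx Hgx].
    destruct (Rle_lt_dec x u) as [ok|Hxu]; [exact ok|]. specialize (Hgx u ltac:(lra)). lra. }
  assert (Hge : l <= g s).
  { destruct (Rle_lt_dec l (g s)) as [ok|Hlt]; [exact ok|exfalso].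
    destruct (Req_dec s b) as [->|Hsb']; [lra|].
    destruct (continuity_pt_near g s (l - g s) (Hc s ltac:(lra)) ltac:(lra)) as [d [Hd Hnear]].
    set (s' := Rmin b (s + d / 2)).
    assert (Hs' : s < s' <= b) by (split; [apply Rmin_glb_lt|apply Rmin_l]; lra).
    assert (Hs'd : s' <= s + d / 2) by apply Rmin_r.
    enough (E s') by (pose proof (Hub s' H); lra).
    split; [lra|]. intros u Hu. destruct (Rlt_le_dec u s) as [Hus|Hus]; [apply Hbelow; lra|].
    assert (Hud : Rabs (u - s) < d) by (rewrite Rabs_pos_eq; lra).
    specialize (Hnear u Hud). apply Rabs_lt_between in Hnear. lra. }
  assert (Hsa : a < s) by (destruct Has as [|<-]; [assumption|lra]).
  assert (Hle : g s <= l).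
  { destruct (Rle_lt_dec (g s) l) as [ok|Hlt]; [exact ok|exfalso].
    destruct (continuity_pt_near g s (g s - l) (Hc s ltac:(lra)) ltac:(lra)) as [d [Hd Hnear]].
    set (u := Rmax a (s - d / 2)).
    assert (Hu : a <= u < s) by (split; [apply Rmax_l|apply Rmax_lub_lt]; lra).
    assert (Hud : Rabs (u - s) < d).
    { rewrite Rabs_left by lra. pose proof (Rmax_r a (s - d / 2)) as Hm. fold u in Hm. lra. }
    specialize (Hnear u Hud). apply Rabs_lt_between in Hnear. specialize (Hbelow u Hu). lra. }
  exists s. repeat split; auto; lra.
Qed.

(* The sign of [dg] is only known below the level [B]; the first time [g] would rise above
   [g a] it is still below [B]. *)
Lemma barrier_nonincreasing (g dg : R -> R) a b B :
  a <= b ->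
  (forall x, a <= x <= b -> continuity_pt g x) ->
  (forall x, a < x < b -> is_derive g x (dg x)) ->
  (forall x, a < x < b -> g x < B -> dg x <= 0) ->
  g a < B -> g b <= g a.
Proof.
  intros Hab Hc Hd Hneg Ha.
  destruct (Rle_lt_dec (g b) (g a)) as [|Hlt]; [assumption|exfalso].
  set (l := (g a + Rmin (g b) B) / 2).
  assert (Hl : g a < l < g b /\ l < B).
  { pose proof (Rmin_l (g b) B). pose proof (Rmin_r (g b) B).
    assert (g a < Rmin (g b) B) by (apply Rmin_glb_lt; lra). unfold l; lra. }
  destruct (first_crossing g a b l Hab Hc (proj1 Hl)) as [s [Hs [Hgs Hbelow]]].
  (* [MVT_gen] may return an endpoint, where nothing is known about [dg]. *)
  set (df := fun x => if Rlt_dec a x then if Rlt_dec x s then dg x else 0 else 0).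
  destruct (MVT_gen g a s df) as [c [Hc' Hmvt]].
  - rewrite Rmin_left, Rmax_right by lra. intros x Hx. unfold df.
    destruct (Rlt_dec a x); [|lra]. destruct (Rlt_dec x s); [|lra]. apply Hd; lra.
  - rewrite Rmin_left, Rmax_right by lra. intros x Hx. apply Hc; lra.
  - assert (Hdf : df c <= 0).
    { unfold df. destruct (Rlt_dec a c); [|lra]. destruct (Rlt_dec c s); [|lra].
      apply Hneg; [lra|]. specialize (Hbelow c ltac:(lra)). lra. }
    assert (df c * (s - a) <= 0) by nra. lra.
Qed.

(** * Periodic extension *)

Definition pmod (T s : R) : R := s - T * IZR (Int_part (s / T)).

Lemma pmod_bounds T s : 0 < T -> 0 <= pmod T s < T.
Proof.
  intros HT. unfold pmod. destruct (base_Int_part (s / T)) as [H1 H2].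
  assert (Hs : s = T * (s / T)) by (field; lra).
  split; nra.
Qed.

Lemma pmod_eq T s (k : Z) : 0 < T -> T * IZR k <= s < T * IZR k + T -> pmod T s = s - T * IZR k.
Proof.
  intros HT Hs. unfold pmod. replace (Int_part (s / T)) with k; [reflexivity|].
  apply Int_part_spec.
  assert (Hq : s / T = IZR k + (s - T * IZR k) / T) by (field; lra).
  assert (0 <= (s - T * IZR k) / T) by (apply Rdiv_le_0_compat; lra).
  assert ((s - T * IZR k) / T < 1) by (apply Rlt_div_l; lra).
  lra.
Qed.

Lemma periodic_IZR (phi : R -> R) T : (forall t, phi (t + T) = phi t) ->
  forall (k : Z) x, phi (x + IZR k * T) = phi x.
Proof.
  intros Hp.
  assert (Hnat : forall n x, phi (x + INR n * T) = phi x).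
  { induction n as [|n IH]; intros x; [simpl; f_equal; ring|].
    rewrite S_INR, <- (IH x), <- (Hp (x + INR n * T)). f_equal. ring. }
  intros [|k|k] x.
  - simpl. f_equal. ring.
  - rewrite <- positive_nat_Z, <- INR_IZR_INZ. apply Hnat.
  - rewrite <- Pos2Z.opp_pos, opp_IZR, <- positive_nat_Z, <- INR_IZR_INZ.
    rewrite <- (Hnat (Pos.to_nat k)). f_equal. ring.
Qed.

Lemma periodic_pmod (phi : R -> R) T : (forall t, phi (t + T) = phi t) ->
  forall s, phi (pmod T s) = phi s.
Proof.
  intros Hp s. unfold pmod. rewrite <- (periodic_IZR phi T Hp (Int_part (s / T))). f_equal. ring.
Qed.

Lemma periodic_continuous_bounded (phi : R -> R) T : 0 < T ->
  (forall t, continuous phi t) -> (forall t, phi (t + T) = phi t) ->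
  exists B, forall s, Rabs (phi s) <= B.
Proof.
  intros HT Hc Hp.
  destruct (continuity_ab_maj (fun s => Rabs (phi s)) 0 T ltac:(lra)) as [M [HM _]].
  { intros c _. apply continuity_pt_of_continuous. auto with continuityR. }
  exists (Rabs (phi M)). intros s. rewrite <- (periodic_pmod phi T Hp s).
  apply HM. pose proof (pmod_bounds T s HT). lra.
Qed.

Lemma is_derive_shift (p : R -> R) dp x c :
  is_derive p (x - c) dp -> is_derive (fun u => p (u - c)) x dp.
Proof.
  intros Hp. assert (Hs : is_derive (fun u : R => u - c) x 1) by (auto_derive; auto).
  pose proof (is_derive_comp p (fun u => u - c) x dp 1 Hp Hs) as K.
  unfold scal in K; simpl in K; unfold mult in K; simpl in K. rewrite Rmult_1_l in K. exact K.
Qed.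

Lemma is_derive_glue (f1 f2 g : R -> R) s l d : 0 < d ->
  is_derive f1 s l -> is_derive f2 s l -> g s = f1 s -> f1 s = f2 s ->
  (forall u, s <= u < s + d -> g u = f1 u) -> (forall u, s - d < u < s -> g u = f2 u) ->
  is_derive g s l.
Proof.
  intros Hd H1 H2 Hgs H12 Hg1 Hg2. rewrite is_derive_Reals in *.
  intros eps Heps. destruct (H1 eps Heps) as [d1 Hd1]. destruct (H2 eps Heps) as [d2 Hd2].
  assert (Hpos : 0 < Rmin d (Rmin d1 d2)).
  { apply Rmin_glb_lt; [lra|apply Rmin_glb_lt; apply cond_pos]. }
  exists (mkposreal _ Hpos). intros h Hh0 Hh. simpl in Hh.
  pose proof (Rmin_l d (Rmin d1 d2)). pose proof (Rmin_r d (Rmin d1 d2)).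
  pose proof (Rmin_l d1 d2). pose proof (Rmin_r d1 d2).
  destruct (Rlt_dec 0 h) as [Hp|Hn].
  - rewrite Rabs_pos_eq in Hh by lra. rewrite (Hg1 (s + h)), Hgs by lra.
    apply Hd1; [exact Hh0|]. rewrite Rabs_pos_eq; lra.
  - rewrite Rabs_left in Hh by lra. rewrite (Hg2 (s + h)), Hgs, H12 by lra.
    apply Hd2; [exact Hh0|]. rewrite Rabs_left; lra.
Qed.

Lemma is_derive_periodic_extension T (p dp : R -> R) : 0 < T ->
  (forall t, 0 <= t <= T -> is_derive p t (dp t)) -> p 0 = p T -> dp 0 = dp T ->
  forall s, is_derive (fun u => p (pmod T u)) s (dp (pmod T s)).
Proof.
  intros HT Hd Hp0 Hdp0 s.
  set (k := Int_part (s / T)).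
  assert (Hms : pmod T s = s - T * IZR k) by reflexivity.
  destruct (pmod_bounds T s HT) as [Hr1 Hr2].
  destruct (Req_dec (pmod T s) 0) as [Hz|Hnz].
  - rewrite Hz.
    apply (is_derive_glue (fun u => p (u - T * IZR k)) (fun u => p (u - T * IZR (k - 1))) _
             s (dp 0) T HT); rewrite ?minus_IZR.
    + apply is_derive_shift. replace (s - T * IZR k) with 0 by lra. apply Hd; lra.
    + apply is_derive_shift. replace (s - T * (IZR k - 1)) with T by lra.
      rewrite Hdp0. apply Hd; lra.
    + rewrite Hz. f_equal. lra.
    + replace (s - T * IZR k) with 0 by lra. replace (s - T * (IZR k - 1)) with T by lra.
      exact Hp0.
    + intros u Hu. f_equal. apply pmod_eq; lra.
    + intros u Hu. f_equal. rewrite <- minus_IZR. apply pmod_eq; [exact HT|]. rewrite minus_IZR. lra.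
  - apply (is_derive_ext_loc (fun u => p (u - T * IZR k))).
    + assert (Hpos : 0 < Rmin (pmod T s) (T - pmod T s)) by (apply Rmin_glb_lt; lra).
      exists (mkposreal _ Hpos). intros u Hu. change (Rabs (u - s) < Rmin (pmod T s) (T - pmod T s)) in Hu.
      pose proof (Rmin_l (pmod T s) (T - pmod T s)). pose proof (Rmin_r (pmod T s) (T - pmod T s)).
      apply Rabs_lt_between in Hu. f_equal. symmetry. apply pmod_eq; lra.
    + apply is_derive_shift. rewrite <- Hms. apply Hd; lra.
Qed.

Lemma ex_RInt_of_continuous (w : R -> R) a b : (forall s, continuous w s) -> ex_RInt w a b.
Proof. intros Hw. apply (@ex_RInt_continuous R_CompleteNormedModule). intros; apply Hw. Qed.

Lemma is_derive_RInt_from (w : R -> R) t0 c t : (forall s, continuous w s) ->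
  is_derive (fun u => c + RInt w t0 u) t (w t).
Proof.
  intros Hw.
  assert (HI : is_derive (fun u => RInt w t0 u) t (w t)).
  { apply (is_derive_RInt w (fun u => RInt w t0 u) t0 t); [|apply Hw].
    apply filter_forall. intros b. apply (@RInt_correct R_CompleteNormedModule).
    apply ex_RInt_of_continuous, Hw. }
  pose proof (is_derive_plus (fun _ => c) _ t zero (w t) (is_derive_const c t) HI) as K.
  rewrite plus_zero_l in K. exact K.
Qed.

Lemma RInt_abs_pair_le (w1 w2 h : R -> R) a b : a <= b ->
  (forall s, continuous w1 s) -> (forall s, continuous w2 s) -> (forall s, continuous h s) ->
  (forall s, a <= s <= b -> Rabs (w1 s) + Rabs (w2 s) <= h s) ->
  Rabs (RInt w1 a b) + Rabs (RInt w2 a b) <= RInt h a b.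
Proof.
  intros Hab H1 H2 Hh Hb.
  assert (C1 : forall s, continuous (fun t => Rabs (w1 t)) s) by auto with continuityR.
  assert (C2 : forall s, continuous (fun t => Rabs (w2 t)) s) by auto with continuityR.
  pose proof (abs_RInt_le w1 a b Hab (ex_RInt_of_continuous w1 a b H1)).
  pose proof (abs_RInt_le w2 a b Hab (ex_RInt_of_continuous w2 a b H2)).
  assert (Hsum : RInt (fun x => Rabs (w1 x) + Rabs (w2 x)) a b <= RInt h a b).
  { apply RInt_le; auto using ex_RInt_of_continuous with continuityR.
    intros; apply Hb; lra. }
  assert (E : RInt (fun x => Rabs (w1 x) + Rabs (w2 x)) a b
              = RInt (fun x => Rabs (w1 x)) a b + RInt (fun x => Rabs (w2 x)) a b)
    by exact (RInt_plus _ _ a b (ex_RInt_of_continuous _ a b C1) (ex_RInt_of_continuous _ a b C2)).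
  lra.
Qed.

Lemma RInt_pow_right (C t0 t : R) m :
  RInt (fun s => C * (s - t0) ^ m) t0 t = C * (t - t0) ^ S m / INR (S m).
Proof.
  apply is_RInt_unique.
  assert (HS : INR (S m) <> 0) by (apply not_0_INR; lia).
  set (F := fun s => C * (s - t0) ^ S m / INR (S m)).
  replace (C * (t - t0) ^ S m / INR (S m)) with (minus (F t) (F t0)).
  2:{ unfold F, minus, plus, opp; simpl. field. exact HS. }
  apply (@is_RInt_derive R_CompleteNormedModule).
  - intros x _. unfold F. auto_derive; [exact I|].
    change (match m with 0%nat => 1 | S _ => INR m + 1 end) with (INR (S m)).
    replace (x + - t0) with (x - t0) by ring. field. exact HS.
  - intros x _. apply continuousR_of_derive. auto_derive. exact I.
Qed.

Lemma RInt_pow_left (C t0 t : R) m :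
  RInt (fun s => C * (t0 - s) ^ m) t t0 = C * (t0 - t) ^ S m / INR (S m).
Proof.
  apply is_RInt_unique.
  assert (HS : INR (S m) <> 0) by (apply not_0_INR; lia).
  set (F := fun s => - C * (t0 - s) ^ S m / INR (S m)).
  replace (C * (t0 - t) ^ S m / INR (S m)) with (minus (F t0) (F t)).
  2:{ unfold F, minus, plus, opp; simpl. field. exact HS. }
  apply (@is_RInt_derive R_CompleteNormedModule).
  - intros x _. unfold F. auto_derive; [exact I|].
    change (match m with 0%nat => 1 | S _ => INR m + 1 end) with (INR (S m)).
    replace (t0 + - x) with (t0 - x) by ring. field. exact HS.
  - intros x _. apply continuousR_of_derive. auto_derive. exact I.
Qed.

Lemma RInt_abs_pair_pow_bound (w1 w2 : R -> R) C m t0 t :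
  (forall s, continuous w1 s) -> (forall s, continuous w2 s) ->
  (forall s, Rmin t0 t <= s <= Rmax t0 t -> Rabs (w1 s) + Rabs (w2 s) <= C * Rabs (s - t0) ^ m) ->
  Rabs (RInt w1 t0 t) + Rabs (RInt w2 t0 t) <= C * Rabs (t - t0) ^ S m / INR (S m).
Proof.
  intros H1 H2 Hb.
  assert (Hpow : forall c, forall s, continuous (fun s => C * (s - c) ^ m) s).
  { intros c s. apply continuousR_of_derive. auto_derive. exact I. }
  assert (Hpow' : forall c, forall s, continuous (fun s => C * (c - s) ^ m) s).
  { intros c s. apply continuousR_of_derive. auto_derive. exact I. }
  destruct (Rle_lt_dec t0 t) as [Ht|Ht].
  - rewrite (Rabs_pos_eq (t - t0)), <- RInt_pow_right by lra.
    apply RInt_abs_pair_le; auto.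
    intros s Hs. rewrite <- (Rabs_pos_eq (s - t0)) by lra. apply Hb.
    rewrite Rmin_left, Rmax_right; lra.
  - rewrite (Rabs_left (t - t0)) by lra. replace (- (t - t0)) with (t0 - t) by ring.
    rewrite <- RInt_pow_left.
    rewrite <- (Rabs_Ropp (RInt w1 t0 t)), <- (Rabs_Ropp (RInt w2 t0 t)).
    rewrite <- (opp_RInt_swap w1), <- (opp_RInt_swap w2) by (apply ex_RInt_of_continuous; auto).
    change opp with Ropp. rewrite !Ropp_involutive.
    apply RInt_abs_pair_le; auto; [lra|].
    intros s Hs. replace (t0 - s) with (Rabs (s - t0)) by (rewrite Rabs_left1; lra).
    apply Hb. rewrite Rmin_right, Rmax_left; lra.
Qed.

Lemma eq_RInt_of_approx (X c t0 t C : R) (G : R -> R) (Gn : nat -> R -> R) (e : nat -> R) :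
  (forall n s, continuous (Gn n) s) -> (forall s, continuous G s) -> 0 <= C ->
  (forall eps, 0 < eps -> exists n, e n < eps) ->
  (forall n, Rabs (X - (c + RInt (Gn n) t0 t)) <= e n) ->
  (forall n s, Rmin t0 t <= s <= Rmax t0 t -> Rabs (Gn n s - G s) <= C * e n) ->
  X = c + RInt G t0 t.
Proof.
  intros HGn HG HC He Hap Hunif. apply cond_eq. intros eps Heps.
  set (W := Rabs (t - t0)). assert (HW : 0 <= W) by apply Rabs_pos.
  destruct (He (eps / (1 + C * W))) as [n Hn].
  { apply Rdiv_lt_0_compat; [lra|]. pose proof (Rmult_le_pos _ _ HC HW). lra. }
  assert (Hint : Rabs (RInt (fun s => Gn n s - G s) t0 t) <= W * (C * e n)).
  { apply (norm_RInt_le_const_abs (V := R_NormedModule) (fun s => Gn n s - G s)); [exact (Hunif n)|].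
    apply (@RInt_correct R_CompleteNormedModule), ex_RInt_of_continuous. auto with continuityR. }
  rewrite (RInt_minus (Gn n) G) in Hint by (apply ex_RInt_of_continuous; auto).
  change minus with Rminus in Hint.
  pose proof (Hap n) as Hn'. pose proof (Rabs_pos (X - (c + RInt (Gn n) t0 t))).
  assert (Hen : 0 <= e n) by lra.
  replace (X - (c + RInt G t0 t)) with
    ((X - (c + RInt (Gn n) t0 t)) + (RInt (Gn n) t0 t - RInt G t0 t)) by ring.
  eapply Rle_lt_trans; [apply Rabs_triang|].
  assert (e n * (1 + C * W) < eps).
  { apply (Rmult_lt_compat_r (1 + C * W)) in Hn; [|pose proof (Rmult_le_pos _ _ HC HW); lra].
    replace (eps / (1 + C * W) * (1 + C * W)) with eps in Hn
      by (field; pose proof (Rmult_le_pos _ _ HC HW); lra). exact Hn. }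
  nra.
Qed.

Lemma continuous_uniform_limit (F : nat -> R -> R) (Fl : R -> R) t :
  (forall n s, continuous (F n) s) ->
  (forall eps, 0 < eps -> exists n, forall s, Rabs (s - t) <= 1 -> Rabs (Fl s - F n s) < eps) ->
  continuous Fl t.
Proof.
  intros HF Hunif. apply continuous_of_continuity_pt, continuity_pt_locally. intros eps.
  pose proof (cond_pos eps) as Heps.
  destruct (Hunif (eps / 3) ltac:(lra)) as [n Hn].
  destruct (continuity_pt_near (F n) t (eps / 3) (continuity_pt_of_continuous _ _ (HF n t))
              ltac:(lra)) as [d [Hd Hnear]].
  assert (Hpos : 0 < Rmin d 1) by (apply Rmin_glb_lt; lra).
  exists (mkposreal _ Hpos). intros s Hs. change (Rabs (s - t) < Rmin d 1) in Hs.
  change (Rabs (Fl s - Fl t) < eps).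
  pose proof (Rmin_l d 1). pose proof (Rmin_r d 1).
  pose proof (Hn s ltac:(lra)) as Es. pose proof (Hn t ltac:(rewrite Rminus_diag, Rabs_R0; lra)) as Et.
  pose proof (Hnear s ltac:(lra)) as Ens.
  pose proof (Rabs_sub_triang (Fl s) (Fl t) (F n s)) as T1.
  pose proof (Rabs_sub_triang (F n s) (Fl t) (F n t)) as T2.
  rewrite (Rabs_minus_sym (F n t)) in T2. lra.
Qed.

Fixpoint partial_sum (u : nat -> R) (n : nat) : R :=
  match n with O => 0 | S n => partial_sum u n + u n end.

Lemma partial_sum_scal c u n : partial_sum (fun i => c * u i) n = c * partial_sum u n.
Proof. induction n as [|n IH]; simpl; [ring|]. rewrite IH. ring. Qed.

Lemma partial_sum_le u n m : (forall i, 0 <= u i) -> (n <= m)%nat -> partial_sum u n <= partial_sum u m.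
Proof. intros Hu Hnm. induction Hnm as [|m _ IH]; simpl; [lra|]. pose proof (Hu m). lra. Qed.

Lemma partial_sum_le_limit u l : (forall i, 0 <= u i) ->
  (forall eps, 0 < eps -> exists N, forall n, (N <= n)%nat -> Rabs (partial_sum u n - l) < eps) ->
  forall n, partial_sum u n <= l.
Proof.
  intros Hu Hl n. destruct (Rle_lt_dec (partial_sum u n) l) as [|Hlt]; [assumption|exfalso].
  destruct (Hl (partial_sum u n - l) ltac:(lra)) as [N HN].
  specialize (HN (max N n) ltac:(lia)).
  pose proof (partial_sum_le u n (max N n) Hu ltac:(lia)).
  apply Rabs_lt_between in HN. lra.
Qed.

Lemma partial_sum_exp x : forall eps, 0 < eps -> exists N, forall n, (N <= n)%nat ->
  Rabs (partial_sum (fun i => / INR (fact i) * x ^ i) n - exp x) < eps.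
Proof.
  intros eps He.
  assert (Hsum : forall n u, sum_f_R0 u n = partial_sum u (S n)).
  { induction n as [|n IH]; intros u; simpl; [ring|]. rewrite IH. simpl. ring. }
  destruct (proj2_sig (exist_exp x) eps He) as [N HN]. exists (S N). intros n Hn.
  destruct n as [|n]; [lia|]. rewrite <- Hsum. apply HN. lia.
Qed.

(** * Global existence by Picard iteration *)

Section Picard.
Variables (a Q L t0 y0 v0 : R) (q g : R -> R).
Hypothesis q_cont : forall t, continuous q t.
Hypothesis q_bound : forall t, Rabs (q t) <= Q.
Hypothesis g_lip : forall x y, Rabs (g x - g y) <= L * Rabs (x - y).

Definition picard_rhs s y v := - a * v - q s * g y.

Fixpoint picard_iter (n : nat) : (R -> R) * (R -> R) :=
  match n with
  | O => (fun _ => y0, fun _ => v0)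
  | S n => (fun t => y0 + RInt (snd (picard_iter n)) t0 t,
            fun t => v0 + RInt (fun s => picard_rhs s (fst (picard_iter n) s) (snd (picard_iter n) s)) t0 t)
  end.

Definition picard_y n := fst (picard_iter n).
Definition picard_v n := snd (picard_iter n).

Let Q_ge0 : 0 <= Q.
Proof. pose proof (q_bound 0). pose proof (Rabs_pos (q 0)). lra. Qed.

Let L_ge0 : 0 <= L.
Proof.
  pose proof (g_lip 1 0) as Hl. pose proof (Rabs_pos (g 1 - g 0)).
  rewrite Rminus_0_r, Rabs_R1 in Hl. lra.
Qed.

Lemma picard_rhs_continuous (Y V : R -> R) :
  (forall s, continuous Y s) -> (forall s, continuous V s) ->
  forall s, continuous (fun s => picard_rhs s (Y s) (V s)) s.
Proof.
  intros HY HV s. unfold picard_rhs. apply continuousR_minus; auto with continuityR.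
  apply continuousR_mult; [auto|]. apply continuousR_comp; [auto|]. exact (continuous_lipschitz g L g_lip _).
Qed.

Definition picard_rate := 1 + Rabs a + Q * L.
Definition picard_gap0 := Rabs v0 + Rabs a * Rabs v0 + Q * Rabs (g y0).

Lemma picard_rate_ge1 : 1 <= picard_rate.
Proof. unfold picard_rate. pose proof (Rabs_pos a). pose proof (Rmult_le_pos _ _ Q_ge0 L_ge0). lra. Qed.

Lemma picard_gap0_ge0 : 0 <= picard_gap0.
Proof.
  unfold picard_gap0.
  pose proof (Rmult_le_pos _ _ (Rabs_pos a) (Rabs_pos v0)).
  pose proof (Rmult_le_pos _ _ Q_ge0 (Rabs_pos (g y0))). pose proof (Rabs_pos v0). lra.
Qed.

Lemma picard_rhs_lipschitz s y1 v1 y2 v2 :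
  Rabs (v1 - v2) + Rabs (picard_rhs s y1 v1 - picard_rhs s y2 v2)
  <= picard_rate * (Rabs (y1 - y2) + Rabs (v1 - v2)).
Proof.
  unfold picard_rhs, picard_rate.
  replace (- a * v1 - q s * g y1 - (- a * v2 - q s * g y2))
    with ((- a) * (v1 - v2) + (- q s) * (g y1 - g y2)) by ring.
  pose proof (Rabs_triang ((- a) * (v1 - v2)) ((- q s) * (g y1 - g y2))) as Ht.
  rewrite !Rabs_mult, !Rabs_Ropp in Ht.
  pose proof (q_bound s). pose proof (g_lip y1 y2). pose proof (Rabs_pos (q s)).
  pose proof (Rabs_pos (g y1 - g y2)). pose proof (Rabs_pos (y1 - y2)). pose proof (Rabs_pos (v1 - v2)).
  pose proof (Rabs_pos a).
  assert (Rabs (q s) * Rabs (g y1 - g y2) <= Q * (L * Rabs (y1 - y2))) by (apply Rmult_le_compat; auto).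
  pose proof (Rmult_le_pos _ _ Q_ge0 L_ge0). nra.
Qed.

Lemma picard_iter_continuous n :
  (forall s, continuous (picard_y n) s) /\ (forall s, continuous (picard_v n) s).
Proof.
  induction n as [|n [IHY IHV]]; split; intros s; try apply continuousR_const;
    apply continuousR_of_derive; eexists.
  - exact (is_derive_RInt_from (picard_v n) t0 y0 s IHV).
  - exact (is_derive_RInt_from _ t0 v0 s (picard_rhs_continuous _ _ IHY IHV)).
Qed.

Lemma picard_step_bound n t :
  Rabs (picard_y (S n) t - picard_y n t) + Rabs (picard_v (S n) t - picard_v n t)
  <= picard_gap0 * picard_rate ^ n * Rabs (t - t0) ^ S n / INR (fact (S n)).
Proof.
  revert t. induction n as [|n IH]; intros t.
  - change (picard_y 1 t - picard_y 0 t) with (y0 + RInt (fun _ => v0) t0 t - y0).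
    change (picard_v 1 t - picard_v 0 t) with (v0 + RInt (fun s => picard_rhs s y0 v0) t0 t - v0).
    rewrite !Rplus_minus_l.
    eapply Rle_trans; [apply (RInt_abs_pair_pow_bound _ _ picard_gap0 0)|right; simpl; field].
    + intros; apply continuousR_const.
    + apply picard_rhs_continuous; intros; apply continuousR_const.
    + intros s _. rewrite pow_O, Rmult_1_r. unfold picard_gap0, picard_rhs.
      replace (- a * v0 - q s * g y0) with (- a * v0 + - q s * g y0) by ring.
      pose proof (Rabs_triang (- a * v0) (- q s * g y0)) as Ht. rewrite !Rabs_mult, !Rabs_Ropp in Ht.
      pose proof (q_bound s). pose proof (Rabs_pos (g y0)).
      assert (Rabs (q s) * Rabs (g y0) <= Q * Rabs (g y0)) by (apply Rmult_le_compat_r; auto).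
      lra.
  - destruct (picard_iter_continuous n) as [CY0 CV0]. destruct (picard_iter_continuous (S n)) as [CY1 CV1].
    change (picard_y (S (S n)) t - picard_y (S n) t) with
      ((y0 + RInt (picard_v (S n)) t0 t) - (y0 + RInt (picard_v n) t0 t)).
    change (picard_v (S (S n)) t - picard_v (S n) t) with
      ((v0 + RInt (fun s => picard_rhs s (picard_y (S n) s) (picard_v (S n) s)) t0 t) -
       (v0 + RInt (fun s => picard_rhs s (picard_y n s) (picard_v n s)) t0 t)).
    rewrite !Rminus_plus_l_l, <- !(RInt_minus (V := R_CompleteNormedModule))
      by (apply ex_RInt_of_continuous; auto using picard_rhs_continuous).
    replace (picard_gap0 * picard_rate ^ S n * Rabs (t - t0) ^ S (S n) / INR (fact (S (S n))))
      with (picard_rate * (picard_gap0 * picard_rate ^ n / INR (fact (S n))) * Rabs (t - t0) ^ S (S n)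
            / INR (S (S n))).
    2:{ rewrite (fact_simpl (S n)), mult_INR. simpl pow. field.
        split; [apply INR_fact_neq_0|apply not_0_INR; lia]. }
    apply RInt_abs_pair_pow_bound;
      [intros; apply continuousR_minus; auto using picard_rhs_continuous..|].
    intros s _. change minus with Rminus.
    eapply Rle_trans; [apply picard_rhs_lipschitz|].
    replace (picard_rate * (picard_gap0 * picard_rate ^ n / INR (fact (S n))) * Rabs (s - t0) ^ S n)
      with (picard_rate * (picard_gap0 * picard_rate ^ n * Rabs (s - t0) ^ S n / INR (fact (S n))))
      by (field; apply INR_fact_neq_0).
    apply Rmult_le_compat_l; [pose proof picard_rate_ge1; lra|]. apply IH.
Qed.

(* [picard_tail W n] bounds the tail of the telescoping series of the iterates on the window
   [|t - t0| <= W]: it is the tail of the exponential series for [picard_rate * W]. *)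
Definition picard_term W n := picard_gap0 * W * (picard_rate * W) ^ n / INR (fact n).
Definition picard_tail W n := picard_gap0 * W * exp (picard_rate * W) - partial_sum (picard_term W) n.

Lemma picard_term_ge0 W n : 0 <= W -> 0 <= picard_term W n.
Proof.
  intros HW. unfold picard_term. pose proof picard_gap0_ge0. pose proof picard_rate_ge1.
  apply Rmult_le_pos; [repeat apply Rmult_le_pos; auto; apply pow_le; nra|].
  left. apply Rinv_0_lt_compat, INR_fact_lt_0.
Qed.

Lemma picard_step_bound_window n t W : Rabs (t - t0) <= W ->
  Rabs (picard_y (S n) t - picard_y n t) + Rabs (picard_v (S n) t - picard_v n t) <= picard_term W n.
Proof.
  intros HW. eapply Rle_trans; [apply picard_step_bound|]. unfold picard_term.
  pose proof picard_gap0_ge0. pose proof picard_rate_ge1. pose proof (Rabs_pos (t - t0)).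
  assert (Hpow : Rabs (t - t0) ^ S n <= W ^ S n) by (apply pow_incr; lra).
  assert (Hfact : INR (fact n) <= INR (fact (S n))) by (apply le_INR; rewrite fact_simpl; lia).
  pose proof (INR_fact_lt_0 n). pose proof (pow_le picard_rate n ltac:(lra)).
  pose proof (pow_le (Rabs (t - t0)) (S n) ltac:(lra)).
  apply Rle_trans with (picard_gap0 * picard_rate ^ n * Rabs (t - t0) ^ S n / INR (fact n)).
  - apply Rmult_le_compat_l; [apply Rmult_le_pos; [apply Rmult_le_pos|]; lra|]. apply Rinv_le_contravar; lra.
  - replace (picard_gap0 * W * (picard_rate * W) ^ n / INR (fact n))
      with (picard_gap0 * picard_rate ^ n * W ^ S n / INR (fact n))
      by (rewrite Rpow_mult_distr; simpl; field; lra).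
    apply Rmult_le_compat_r; [left; apply Rinv_0_lt_compat; lra|].
    apply Rmult_le_compat_l; [apply Rmult_le_pos|]; lra.
Qed.

Lemma picard_tail_cvg W : 0 <= W ->
  forall eps, 0 < eps -> exists N, forall n, (N <= n)%nat -> Rabs (picard_tail W n) < eps.
Proof.
  intros HW eps He. pose proof picard_gap0_ge0. set (K := picard_gap0 * W).
  assert (HK : 0 <= K) by (apply Rmult_le_pos; lra).
  destruct (partial_sum_exp (picard_rate * W) (eps / (K + 1))) as [N HN].
  { apply Rdiv_lt_0_compat; lra. }
  exists N. intros n Hn. specialize (HN n Hn).
  assert (Hsum : partial_sum (picard_term W) n
                 = K * partial_sum (fun i => / INR (fact i) * (picard_rate * W) ^ i) n).
  { rewrite <- partial_sum_scal. clear Hn HN. induction n as [|n IH]; simpl; [reflexivity|].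
    rewrite IH. f_equal. unfold picard_term, K. field. apply INR_fact_neq_0. }
  unfold picard_tail. fold K. rewrite Hsum.
  set (Sn := partial_sum _ n) in *.
  replace (K * exp (picard_rate * W) - K * Sn) with (- K * (Sn - exp (picard_rate * W))) by ring.
  rewrite Rabs_mult, Rabs_Ropp, (Rabs_pos_eq K) by exact HK.
  pose proof (Rabs_pos (Sn - exp (picard_rate * W))).
  assert (K * Rabs (Sn - exp (picard_rate * W)) <= K * (eps / (K + 1))) by (apply Rmult_le_compat_l; lra).
  assert (K * (eps / (K + 1)) < eps) by (apply (Rmult_lt_reg_r (K + 1)); [lra|]; field_simplify; nra).
  lra.
Qed.

Lemma picard_tail_ge0 W n : 0 <= W -> 0 <= picard_tail W n.
Proof.
  intros HW. unfold picard_tail.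
  enough (partial_sum (picard_term W) n <= picard_gap0 * W * exp (picard_rate * W)) by lra.
  apply partial_sum_le_limit; [intros; apply picard_term_ge0; exact HW|].
  intros eps He. destruct (picard_tail_cvg W HW eps He) as [N HN]. exists N. intros m Hm.
  rewrite Rabs_minus_sym. exact (HN m Hm).
Qed.

Lemma picard_cauchy n m t W : 0 <= W -> Rabs (t - t0) <= W -> (n <= m)%nat ->
  Rabs (picard_y m t - picard_y n t) + Rabs (picard_v m t - picard_v n t) <= picard_tail W n.
Proof.
  intros HW Ht Hnm.
  enough (Hsum : Rabs (picard_y m t - picard_y n t) + Rabs (picard_v m t - picard_v n t)
                 <= partial_sum (picard_term W) m - partial_sum (picard_term W) n).
  { pose proof (picard_tail_ge0 W m HW). unfold picard_tail in *. lra. }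
  induction Hnm as [|m Hnm IH].
  - rewrite !Rminus_diag, Rabs_R0. lra.
  - simpl partial_sum. pose proof (picard_step_bound_window m t W Ht).
    pose proof (Rabs_sub_triang (picard_y (S m) t) (picard_y n t) (picard_y m t)).
    pose proof (Rabs_sub_triang (picard_v (S m) t) (picard_v n t) (picard_v m t)).
    lra.
Qed.

Lemma picard_limit_exists t :
  ex_finite_lim_seq (fun n => picard_y n t) /\ ex_finite_lim_seq (fun n => picard_v n t).
Proof.
  set (W := Rabs (t - t0)). assert (HW : 0 <= W) by apply Rabs_pos.
  assert (Hpair : forall n m, Rabs (picard_y n t - picard_y m t) + Rabs (picard_v n t - picard_v m t)
                              <= picard_tail W (min n m)).
  { intros n m. destruct (le_lt_dec n m) as [Hnm|Hnm].
    - rewrite Nat.min_l, (Rabs_minus_sym (picard_y n t)), (Rabs_minus_sym (picard_v n t)) by exact Hnm.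
      apply picard_cauchy; auto. apply Rle_refl.
    - rewrite Nat.min_r by lia. apply picard_cauchy; [auto|apply Rle_refl|lia]. }
  split; apply ex_lim_seq_cauchy_corr; intros eps;
    destruct (picard_tail_cvg W HW eps (cond_pos eps)) as [N HN]; exists N; intros n m Hn Hm;
    specialize (Hpair n m); specialize (HN (min n m) ltac:(lia)); apply Rabs_lt_between in HN;
    pose proof (Rabs_pos (picard_y n t - picard_y m t));
    pose proof (Rabs_pos (picard_v n t - picard_v m t)); lra.
Qed.

Definition picard_ylim t : R := real (Lim_seq (fun n => picard_y n t)).
Definition picard_vlim t : R := real (Lim_seq (fun n => picard_v n t)).

Lemma picard_limit_bound n t W : 0 <= W -> Rabs (t - t0) <= W ->
  Rabs (picard_ylim t - picard_y n t) + Rabs (picard_vlim t - picard_v n t) <= picard_tail W n.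
Proof.
  intros HW Ht. apply le_epsilon. intros eps He.
  destruct (picard_limit_exists t) as [[ly Hy] [lv Hv]].
  unfold picard_ylim, picard_vlim. rewrite (is_lim_seq_unique _ _ Hy), (is_lim_seq_unique _ _ Hv).
  destruct (proj2 (is_lim_seq_spec _ ly) Hy (mkposreal (eps / 2) ltac:(lra))) as [N1 H1].
  destruct (proj2 (is_lim_seq_spec _ lv) Hv (mkposreal (eps / 2) ltac:(lra))) as [N2 H2].
  set (m := max (max N1 N2) n).
  specialize (H1 m ltac:(unfold m; lia)). specialize (H2 m ltac:(unfold m; lia)). simpl in H1, H2.
  pose proof (picard_cauchy n m t W HW Ht ltac:(unfold m; lia)).
  pose proof (Rabs_sub_triang ly (picard_y n t) (picard_y m t)).
  pose proof (Rabs_sub_triang lv (picard_v n t) (picard_v m t)).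
  rewrite Rabs_minus_sym in H1, H2. simpl. lra.
Qed.

Lemma picard_limit_continuous t : continuous picard_ylim t /\ continuous picard_vlim t.
Proof.
  set (W := Rabs (t - t0) + 1). assert (HW : 0 <= W) by (pose proof (Rabs_pos (t - t0)); unfold W; lra).
  assert (Hunif : forall eps, 0 < eps -> exists n, forall s, Rabs (s - t) <= 1 ->
            Rabs (picard_ylim s - picard_y n s) + Rabs (picard_vlim s - picard_v n s) < eps).
  { intros eps Heps. destruct (picard_tail_cvg W HW eps Heps) as [N HN]. exists N.
    intros s Hs. specialize (HN N (Nat.le_refl N)). apply Rabs_lt_between in HN.
    eapply Rle_lt_trans; [apply picard_limit_bound; [exact HW|]|lra].
    pose proof (Rabs_sub_triang s t0 t). unfold W; lra. }
  split; [apply (continuous_uniform_limit picard_y); [exact (fun n => proj1 (picard_iter_continuous n))|]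
         |apply (continuous_uniform_limit picard_v); [exact (fun n => proj2 (picard_iter_continuous n))|]];
    intros eps Heps; destruct (Hunif eps Heps) as [n Hn]; exists n; intros s Hs; specialize (Hn s Hs);
    pose proof (Rabs_pos (picard_ylim s - picard_y n s));
    pose proof (Rabs_pos (picard_vlim s - picard_v n s)); lra.
Qed.

Lemma picard_tail_small W : 0 <= W -> forall eps, 0 < eps -> exists n, picard_tail W n < eps.
Proof.
  intros HW eps Heps. destruct (picard_tail_cvg W HW eps Heps) as [N HN]. exists N.
  specialize (HN N (Nat.le_refl N)). apply Rabs_lt_between in HN. lra.
Qed.

Lemma picard_tail_succ_le W n : 0 <= W -> picard_tail W (S n) <= picard_tail W n.
Proof. intros HW. unfold picard_tail. simpl. pose proof (picard_term_ge0 W n HW). lra. Qed.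

Lemma picard_ylim_eq t : picard_ylim t = y0 + RInt picard_vlim t0 t.
Proof.
  set (W := Rabs (t - t0)). assert (HW : 0 <= W) by apply Rabs_pos.
  apply (eq_RInt_of_approx _ _ _ _ 1 _ picard_v (picard_tail W)).
  - exact (fun n => proj2 (picard_iter_continuous n)).
  - exact (fun s => proj2 (picard_limit_continuous s)).
  - lra.
  - exact (picard_tail_small W HW).
  - intros n. pose proof (picard_limit_bound (S n) t W HW (Rle_refl _)) as Hb.
    pose proof (picard_tail_succ_le W n HW). pose proof (Rabs_pos (picard_vlim t - picard_v (S n) t)).
    change (picard_y (S n) t) with (y0 + RInt (picard_v n) t0 t) in Hb. lra.
  - intros n s Hs. pose proof (picard_limit_bound n s W HW (Rabs_sub_le_between t0 t s Hs)).
    pose proof (Rabs_pos (picard_ylim s - picard_y n s)). rewrite Rabs_minus_sym. lra.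
Qed.

Lemma picard_vlim_eq t :
  picard_vlim t = v0 + RInt (fun s => picard_rhs s (picard_ylim s) (picard_vlim s)) t0 t.
Proof.
  set (W := Rabs (t - t0)). assert (HW : 0 <= W) by apply Rabs_pos.
  pose proof picard_rate_ge1 as Hrate.
  apply (eq_RInt_of_approx _ _ _ _ picard_rate _
           (fun n s => picard_rhs s (picard_y n s) (picard_v n s)) (picard_tail W)).
  - intros n. exact (picard_rhs_continuous _ _ (proj1 (picard_iter_continuous n))
                                              (proj2 (picard_iter_continuous n))).
  - exact (picard_rhs_continuous _ _ (fun s => proj1 (picard_limit_continuous s))
                                     (fun s => proj2 (picard_limit_continuous s))).
  - lra.
  - exact (picard_tail_small W HW).
  - intros n. pose proof (picard_limit_bound (S n) t W HW (Rle_refl _)) as Hb.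
    pose proof (picard_tail_succ_le W n HW). pose proof (picard_tail_ge0 W n HW).
    pose proof (Rabs_pos (picard_ylim t - picard_y (S n) t)).
    change (picard_v (S n) t)
      with (v0 + RInt (fun s => picard_rhs s (picard_y n s) (picard_v n s)) t0 t) in Hb.
    nra.
  - intros n s Hs. pose proof (picard_limit_bound n s W HW (Rabs_sub_le_between t0 t s Hs)) as Hb.
    pose proof (picard_rhs_lipschitz s (picard_ylim s) (picard_vlim s) (picard_y n s) (picard_v n s)) as Hl.
    pose proof (Rabs_pos (picard_vlim s - picard_v n s)).
    rewrite Rabs_minus_sym. apply Rmult_le_compat_l with (r := picard_rate) in Hb; lra.
Qed.

Theorem picard_global_solution : exists Y V : R -> R,
  (forall t, is_derive Y t (V t) /\ is_derive V t (- a * V t - q t * g (Y t))) /\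
  Y t0 = y0 /\ V t0 = v0.
Proof.
  pose proof (fun s => proj1 (picard_limit_continuous s)) as CY.
  pose proof (fun s => proj2 (picard_limit_continuous s)) as CV.
  exists picard_ylim, picard_vlim. split; [intros t; split|split].
  - apply (is_derive_ext (fun u => y0 + RInt picard_vlim t0 u)).
    + intros u. symmetry. apply picard_ylim_eq.
    + apply is_derive_RInt_from, CV.
  - apply (is_derive_ext (fun u => v0 + RInt (fun s => picard_rhs s (picard_ylim s) (picard_vlim s)) t0 u)).
    + intros u. symmetry. apply picard_vlim_eq.
    + apply (is_derive_RInt_from (fun s => picard_rhs s (picard_ylim s) (picard_vlim s))).
      exact (picard_rhs_continuous _ _ CY CV).
  - rewrite picard_ylim_eq, RInt_point. apply Rplus_0_r.
  - rewrite picard_vlim_eq, RInt_point. apply Rplus_0_r.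
Qed.
End Picard.

Lemma hermitian_entries a1 b1 a2 b2 a3 b3 a4 b4 :
  hermitian (mkM2 (a1, b1) (a2, b2) (a3, b3) (a4, b4)) ->
  a3 = a2 /\ b3 = - b2 /\ b1 = 0 /\ b4 = 0.
Proof.
  intros Hh. unfold hermitian, Madj, Cconj in Hh.
  pose proof (f_equal (fun M => fst (m21 M)) Hh) as E1.
  pose proof (f_equal (fun M => snd (m21 M)) Hh) as E2.
  pose proof (f_equal (fun M => snd (m11 M)) Hh) as E3.
  pose proof (f_equal (fun M => snd (m22 M)) Hh) as E4.
  cbn [m11 m12 m21 m22 fst snd] in E1, E2, E3, E4. lra.
Qed.

Lemma hermitian_Re21 (M : M2) : hermitian M -> Re (m21 M) = Re (m12 M).
Proof.
  destruct M as [[a1 b1] [a2 b2] [a3 b3] [a4 b4]]. intros Hh.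
  apply (hermitian_entries _ _ _ _ _ _ _ _ Hh).
Qed.

Lemma lyapunov_rhs_Re (M : M2) alpha btil (phitil : R -> R) mu t : hermitian M ->
  let D := Defs.Madd (Defs.Mopp MI)
             (Defs.Mopp (Defs.Madd (Defs.Mmul M (Atil alpha btil phitil mu t))
                                   (Defs.Mmul (Madj (Atil alpha btil phitil mu t)) M))) in
  let c := btil * mu ^ 2 + mu * phitil t in
  Re (m11 D) = -1 + 2 * c * Re (m12 M) /\
  Re (m12 D) = - Re (m11 M) + alpha * mu * Re (m12 M) + c * Re (m22 M) /\
  Re (m22 D) = -1 - 2 * Re (m12 M) + 2 * (alpha * mu) * Re (m22 M).
Proof.
  intros Hh D c. destruct M as [[a1 b1] [a2 b2] [a3 b3] [a4 b4]].
  destruct (hermitian_entries _ _ _ _ _ _ _ _ Hh) as [E1 _].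
  unfold D, c, Defs.Madd, Defs.Mopp, Defs.Mmul, Madj, MI, Atil. cbn [m11 m12 m21 m22].
  unfold Cplus, Copp, Cmult, Cconj, RtoC, Re. cbn [fst snd]. rewrite E1.
  split; [|split]; ring.
Qed.

Lemma vnorm_sq (z : C * C) : vnorm z ^ 2 = Cmod (fst z) ^ 2 + Cmod (snd z) ^ 2.
Proof. unfold vnorm. rewrite pow2_sqrt; [reflexivity|apply pow2_sum_ge0]. Qed.

Lemma vnorm_le_Cmod_sum z : vnorm z <= Cmod (fst z) + Cmod (snd z).
Proof.
  pose proof (Cmod_ge_0 (fst z)). pose proof (Cmod_ge_0 (snd z)).
  apply Rsqr_incr_0_var; [|lra]. rewrite !Rsqr_pow2, vnorm_sq. nra.
Qed.

Lemma Cmod_le_vnorm z : Cmod (fst z) <= vnorm z /\ Cmod (snd z) <= vnorm z.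
Proof.
  pose proof (vnorm_sq z). pose proof (pow2_ge_0 (Cmod (fst z))). pose proof (pow2_ge_0 (Cmod (snd z))).
  split; apply Rsqr_incr_0_var; try apply sqrt_pos; rewrite !Rsqr_pow2; lra.
Qed.

Lemma opnorm_ub (A : M2) z : vnorm z = 1 -> vnorm (Mvec A z) <= opnorm A.
Proof.
  intros Hz. unfold opnorm. apply real_Lub_Rbar_ub; [exists z; auto|].
  exists (Cmod (m11 A) + Cmod (m12 A) + Cmod (m21 A) + Cmod (m22 A)).
  intros r [w [Hw ->]]. destruct (Cmod_le_vnorm w) as [H1 H2]. rewrite Hw in H1, H2.
  eapply Rle_trans; [apply vnorm_le_Cmod_sum|]. unfold Mvec; simpl.
  pose proof (Cmod_triangle (Cmult (m11 A) (fst w)) (Cmult (m12 A) (snd w))) as T1.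
  pose proof (Cmod_triangle (Cmult (m21 A) (fst w)) (Cmult (m22 A) (snd w))) as T2.
  rewrite !Cmod_mult in T1, T2.
  pose proof (Cmod_ge_0 (m11 A)). pose proof (Cmod_ge_0 (m12 A)).
  pose proof (Cmod_ge_0 (m21 A)). pose proof (Cmod_ge_0 (m22 A)).
  pose proof (Cmod_ge_0 (fst w)). pose proof (Cmod_ge_0 (snd w)).
  nra.
Qed.

Lemma hermitian_Re_action_bound (M : M2) h y v : hermitian M -> opnorm M <= h ->
  (Re (m11 M) * y + Re (m12 M) * v) ^ 2 + (Re (m12 M) * y + Re (m22 M) * v) ^ 2
  <= h ^ 2 * (y ^ 2 + v ^ 2).
Proof.
  intros Hh Hop. pose proof (hermitian_Re21 M Hh) as E21. unfold Re in *.
  destruct (Req_dec (y ^ 2 + v ^ 2) 0) as [H0|H0].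
  { assert (y = 0) by nra. assert (v = 0) by nra. subst. simpl. nra. }
  set (n := sqrt (y ^ 2 + v ^ 2)).
  assert (Hn2 : n ^ 2 = y ^ 2 + v ^ 2) by (unfold n; rewrite pow2_sqrt; [|apply pow2_sum_ge0]; reflexivity).
  assert (Hn : 0 < n) by (unfold n; apply sqrt_lt_R0; pose proof (pow2_sum_ge0 y v); lra).
  set (z := (RtoC (y / n), RtoC (v / n))).
  assert (Hz : vnorm z = 1).
  { unfold z, vnorm. cbn [fst snd]. rewrite !Cmod_R, <- !Rsqr_pow2, <- !Rsqr_abs, !Rsqr_pow2.
    replace ((y / n) ^ 2 + (v / n) ^ 2) with 1; [apply sqrt_1|].
    field_simplify; [rewrite Hn2; field|]; lra. }
  pose proof (opnorm_ub M z Hz) as Hb. pose proof (sqrt_pos (Cmod (fst (Mvec M z)) ^ 2 + Cmod (snd (Mvec M z)) ^ 2)).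
  assert (Hb2 : vnorm (Mvec M z) ^ 2 <= h ^ 2) by (unfold vnorm in *; nra).
  rewrite vnorm_sq in Hb2. unfold Cmod in Hb2. rewrite !pow2_sqrt in Hb2 by apply pow2_sum_ge0.
  unfold z, Mvec, Cplus, Cmult, RtoC in Hb2. cbn [fst snd] in Hb2.
  rewrite E21, !Rmult_0_r, !Rminus_0_r, !Rplus_0_l in Hb2.
  pose proof (pow2_ge_0 (snd (m11 M) * (y / n) + snd (m12 M) * (v / n))).
  pose proof (pow2_ge_0 (snd (m21 M) * (y / n) + snd (m22 M) * (v / n))).
  set (a1 := fst (m11 M)) in *. set (a2 := fst (m12 M)) in *. set (a4 := fst (m22 M)) in *.
  replace ((a1 * y + a2 * v) ^ 2 + (a2 * y + a4 * v) ^ 2) with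
    (n ^ 2 * ((a1 * (y / n) + a2 * (v / n)) ^ 2 + (a2 * (y / n) + a4 * (v / n)) ^ 2)) by (field; lra).
  rewrite <- Hn2, (Rmult_comm (h ^ 2)). apply Rmult_le_compat_l; [apply pow2_ge_0|].
  lra.
Qed.

Lemma is_derive_quadratic_form (P1 P2 P3 Y V : R -> R) u d1 d2 d3 w :
  is_derive P1 u d1 -> is_derive P2 u d2 -> is_derive P3 u d3 ->
  is_derive Y u (V u) -> is_derive V u w ->
  is_derive (fun s => P1 s * Y s ^ 2 + 2 * P2 s * Y s * V s + P3 s * V s ^ 2) u
    (d1 * Y u ^ 2 + 2 * d2 * Y u * V u + d3 * V u ^ 2
     + 2 * P1 u * Y u * V u + 2 * P2 u * (V u ^ 2 + Y u * w) + 2 * P3 u * V u * w).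
Proof.
  intros H1 H2 H3 HY HV. auto_derive.
  - repeat split; eexists; eauto.
  - rewrite (is_derive_unique (fun x : R => P1 x) _ _ H1), (is_derive_unique (fun x : R => P2 x) _ _ H2),
      (is_derive_unique (fun x : R => P3 x) _ _ H3), (is_derive_unique (fun x : R => Y x) _ _ HY),
      (is_derive_unique (fun x : R => V x) _ _ HV). ring.
Qed.

Lemma is_derive_mult_exp (F : R -> R) (dF c t0 u : R) : is_derive F u dF ->
  is_derive (fun u => F u * exp (c * (u - t0))) u ((dF + c * F u) * exp (c * (u - t0))).
Proof.
  intros HF. auto_derive; [eexists; eauto|].
  rewrite (is_derive_unique (fun x : R => F x) _ _ HF). replace (u + - t0) with (u - t0) by ring. ring.
Qed.

(* [|(y, y')|^2] cannot decay faster than [exp (- K t)], since its derivative is bounded by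
   [K |(y, y')|^2]. *)
Lemma linear_solution_growth (a C s t : R) (c Y V : R -> R) : s <= t ->
  (forall u, Rabs (c u) <= C) ->
  (forall u, is_derive Y u (V u) /\ is_derive V u (- a * V u - c u * Y u)) ->
  (Y s ^ 2 + V s ^ 2) * exp ((2 + 2 * C + 2 * Rabs a) * s)
  <= (Y t ^ 2 + V t ^ 2) * exp ((2 + 2 * C + 2 * Rabs a) * t).
Proof.
  intros Hst Hc HD. set (K := 2 + 2 * C + 2 * Rabs a).
  set (N := fun u => (Y u ^ 2 + V u ^ 2) * exp (K * u)).
  set (dN := fun u => (2 * Y u * V u + 2 * V u * (- a * V u - c u * Y u) + K * (Y u ^ 2 + V u ^ 2))
                      * exp (K * u)).
  assert (HN : forall u, is_derive (fun u => - N u) u (- dN u)).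
  { intros u. destruct (HD u) as [DY DV]. apply (is_derive_opp N). unfold N, dN.
    auto_derive; [repeat split; eexists; eauto|].
    rewrite (is_derive_unique (fun x : R => Y x) _ _ DY), (is_derive_unique (fun x : R => V x) _ _ DV). ring. }
  assert (HdN : forall u, 0 <= dN u).
  { intros u. unfold dN. apply Rmult_le_pos; [|left; apply exp_pos].
    pose proof (Hc u). set (y := Y u). set (v := V u).
    pose proof (pow2_ge_0 (y + v)). pose proof (pow2_ge_0 (y - v)).
    pose proof (Rabs_pos (c u)). pose proof (Rle_abs (c u)). pose proof (Rle_abs (- c u)).
    pose proof (Rabs_pos a). pose proof (Rle_abs a). pose proof (pow2_ge_0 y). pose proof (pow2_ge_0 v).
    rewrite Rabs_Ropp in *. unfold K. nra. }
  enough (- N t <= - N s) by (unfold N in *; lra).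
  apply (barrier_nonincreasing (fun u => - N u) (fun u => - dN u) s t (- N s + 1)); try lra.
  - intros x _. apply continuity_pt_of_continuous, continuousR_of_derive. eexists. apply HN.
  - intros x _. apply HN.
  - intros x _ _. pose proof (HdN x). lra.
Qed.

(** * The Lyapunov form of the linearised equation *)

Section Lyapunov.
Variables (T alpha btil mu : R) (phitil : R -> R) (H : R -> M2).
Hypothesis T_pos : 0 < T.
Hypothesis phitil_cont : forall t, continuous phitil t.
Hypothesis phitil_per : forall t, phitil (t + T) = phitil t.
Hypothesis H_lyap : lyap_periodic_sol T alpha btil phitil mu H.
Hypothesis hmax_pos : 0 < hmax T H.

Definition lin_coef t := btil * mu ^ 2 + mu * phitil t.

(* Only the real parts of the entries of [H] enter the quadratic form on real vectors. *)
Definition hre11 t := Re (m11 (H t)).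
Definition hre12 t := Re (m12 (H t)).
Definition hre22 t := Re (m22 (H t)).

Definition lyap_form t y v := hre11 t * y ^ 2 + 2 * hre12 t * y * v + hre22 t * v ^ 2.

Lemma lin_coef_continuous t : continuous lin_coef t.
Proof. unfold lin_coef. auto with continuityR. Qed.

Lemma lin_coef_periodic t : lin_coef (t + T) = lin_coef t.
Proof. unfold lin_coef. rewrite phitil_per. reflexivity. Qed.

Lemma hre_derive t : 0 <= t <= T ->
  is_derive hre11 t (-1 + 2 * lin_coef t * hre12 t) /\
  is_derive hre12 t (- hre11 t + alpha * mu * hre12 t + lin_coef t * hre22 t) /\
  is_derive hre22 t (-1 - 2 * hre12 t + 2 * (alpha * mu) * hre22 t).
Proof.
  intros Ht. destruct H_lyap as [Hd _]. destruct (Hd t Ht) as [Hh [[D11 _] [[D12 _] [_ [D22 _]]]]].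
  destruct (lyapunov_rhs_Re (H t) alpha btil phitil mu t Hh) as [E1 [E2 E3]].
  rewrite E1 in D11. rewrite E2 in D12. rewrite E3 in D22. auto.
Qed.

Lemma hre_periodic : hre11 0 = hre11 T /\ hre12 0 = hre12 T /\ hre22 0 = hre22 T.
Proof. destruct H_lyap as [_ [E _]]. unfold hre11, hre12, hre22. rewrite E. auto. Qed.

Lemma opnorm_le_hmax s : 0 <= s <= T -> opnorm (H s) <= hmax T H.
Proof.
  intros Hs. unfold hmax.
  destruct (real_Lub_Rbar_ub_or_0 (fun r => exists t, 0 <= t <= T /\ r = opnorm (H t)) (opnorm (H s)))
    as [|E]; [exists s; auto|assumption|].
  unfold hmax in hmax_pos. lra.
Qed.

Lemma hre_action_bound s y v : 0 <= s <= T ->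
  (hre11 s * y + hre12 s * v) ^ 2 + (hre12 s * y + hre22 s * v) ^ 2 <= hmax T H ^ 2 * (y ^ 2 + v ^ 2).
Proof.
  intros Hs. destruct H_lyap as [Hd _].
  apply hermitian_Re_action_bound; [apply (Hd s Hs)|apply opnorm_le_hmax, Hs].
Qed.

Lemma lyap_form_le s y v : 0 <= s <= T -> lyap_form s y v <= hmax T H * (y ^ 2 + v ^ 2).
Proof.
  intros Hs. pose proof (hre_action_bound s y v Hs). pose proof (pow2_sum_ge0 y v).
  set (A := hre11 s * y + hre12 s * v) in *. set (B := hre12 s * y + hre22 s * v) in *.
  replace (lyap_form s y v) with (y * A + v * B) by (unfold lyap_form, A, B; ring).
  pose proof (pow2_ge_0 (y * B - v * A)).
  assert (Hsq : (y * A + v * B) ^ 2 <= (hmax T H * (y ^ 2 + v ^ 2)) ^ 2) by nra.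
  apply Rsqr_incr_0_var; [rewrite !Rsqr_pow2; exact Hsq|]. nra.
Qed.

Lemma hre_cross_le s y v : 0 <= s <= T ->
  Rabs (hre12 s * y + hre22 s * v) <= hmax T H * sqrt (y ^ 2 + v ^ 2).
Proof.
  intros Hs. pose proof (hre_action_bound s y v Hs).
  pose proof (pow2_ge_0 (hre11 s * y + hre12 s * v)).
  apply Rabs_le_of_pow2_le; [|apply Rmult_le_pos; [lra|apply sqrt_pos]].
  rewrite Rpow_mult_distr, pow2_sqrt by apply pow2_sum_ge0. lra.
Qed.

Lemma lyap_form0_pos y v : (y <> 0 \/ v <> 0) -> 0 < lyap_form 0 y v.
Proof.
  intros Hyv. destruct H_lyap as [_ [_ [Hh Hpos]]].
  assert (Hz : (RtoC y, RtoC v) <> (RtoC 0, RtoC 0)).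
  { intros E. unfold RtoC in E. inversion E. lra. }
  specialize (Hpos _ Hz). unfold lyap_form, hre11, hre12, hre22.
  destruct (H 0) as [[a1 b1] [a2 b2] [a3 b3] [a4 b4]].
  destruct (hermitian_entries _ _ _ _ _ _ _ _ Hh) as [E1 [E2 [E3 E4]]]. subst.
  unfold Mvec, Cplus, Cmult, Cconj, RtoC, Re in *. cbn [m11 m12 m21 m22 fst snd] in *.
  nra.
Qed.

Lemma lyap_form0_coercive : exists l0, 0 < l0 /\ forall y v, l0 * (y ^ 2 + v ^ 2) <= lyap_form 0 y v.
Proof.
  pose proof (lyap_form0_pos 1 0 ltac:(lra)) as H1. pose proof (lyap_form0_pos 0 1 ltac:(lra)) as H2.
  pose proof (lyap_form0_pos (hre12 0) (- hre11 0)) as H3.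
  unfold lyap_form in *. set (a := hre11 0) in *. set (b := hre12 0) in *. set (c := hre22 0) in *.
  assert (Ha : 0 < a) by lra. assert (Hc : 0 < c) by lra.
  assert (Hdet : 0 < a * c - b ^ 2) by (specialize (H3 ltac:(lra)); nra).
  exists ((a * c - b ^ 2) / (a + c)). split; [apply Rdiv_lt_0_compat; lra|].
  intros y v. apply (Rmult_le_reg_r (a + c)); [lra|].
  replace ((a * c - b ^ 2) / (a + c) * (y ^ 2 + v ^ 2) * (a + c))
    with ((a * c - b ^ 2) * (y ^ 2 + v ^ 2)) by (field; lra).
  pose proof (pow2_ge_0 (a * y + b * v)). pose proof (pow2_ge_0 (c * v + b * y)). nra.
Qed.

(* The second term vanishes along solutions of the linearised equation. *)
Lemma lyap_form_derive_linear (Y V : R -> R) u w : 0 <= u <= T ->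
  is_derive Y u (V u) -> is_derive V u w ->
  is_derive (fun s => lyap_form s (Y s) (V s)) u
    (- (Y u ^ 2 + V u ^ 2)
     + 2 * (hre12 u * Y u + hre22 u * V u) * (w + lin_coef u * Y u + alpha * mu * V u)).
Proof.
  intros Hu DY DV. destruct (hre_derive u Hu) as [D1 [D2 D3]].
  pose proof (is_derive_quadratic_form _ _ _ Y V u _ _ _ _ D1 D2 D3 DY DV) as K.
  unfold lyap_form. match type of K with is_derive _ _ ?d => replace (- _ + _) with d by ring end.
  exact K.
Qed.

(* [H 0 > 0] is transported to every [H s]: [z^T H z] decreases along the linearised flow
   from [s] to [T], while [|z|] shrinks at most exponentially, and [H T = H 0]. *)
Lemma lyap_form_coercive :
  exists lam, 0 < lam /\ forall s y v, 0 <= s <= T -> lam * (y ^ 2 + v ^ 2) <= lyap_form s y v.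
Proof.
  destruct lyap_form0_coercive as [l0 [Hl0 Hform0]].
  destruct (periodic_continuous_bounded lin_coef T T_pos lin_coef_continuous lin_coef_periodic)
    as [C HC].
  set (K := 2 + 2 * C + 2 * Rabs (alpha * mu)).
  assert (HK : 0 <= K) by (pose proof (HC 0); pose proof (Rabs_pos (lin_coef 0));
                           pose proof (Rabs_pos (alpha * mu)); unfold K; lra).
  exists (l0 * exp (- (K * T))). split; [apply Rmult_lt_0_compat; [lra|apply exp_pos]|].
  intros s y0 v0 Hs.
  assert (Hid : forall x y : R, Rabs (x - y) <= 1 * Rabs (x - y)) by (intros; lra).
  destruct (picard_global_solution (alpha * mu) C 1 s y0 v0 lin_coef (fun x => x)
              lin_coef_continuous HC Hid) as [Y [V [HD [HY0 HV0]]]].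
  assert (Hdecr : lyap_form T (Y T) (V T) <= lyap_form s (Y s) (V s)).
  { apply (barrier_nonincreasing (fun u => lyap_form u (Y u) (V u)) (fun u => - (Y u ^ 2 + V u ^ 2)) s T
             (lyap_form s (Y s) (V s) + 1)); try lra.
    - intros x Hx. destruct (HD x) as [DY DV].
      apply continuity_pt_of_continuous, continuousR_of_derive. eexists.
      apply (lyap_form_derive_linear Y V x _ ltac:(lra) DY DV).
    - intros x Hx. destruct (HD x) as [DY DV].
      pose proof (lyap_form_derive_linear Y V x _ ltac:(lra) DY DV) as K'.
      match type of K' with is_derive _ _ ?d => replace (- _) with d by ring end. exact K'.
    - intros x _ _. pose proof (pow2_sum_ge0 (Y x) (V x)). lra. }
  assert (Hgrow := linear_solution_growth (alpha * mu) C s T lin_coef Y V ltac:(lra) HC HD).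
  fold K in Hgrow. rewrite HY0, HV0 in Hgrow.
  destruct hre_periodic as [E1 [E2 E3]].
  assert (HT0 : lyap_form T (Y T) (V T) = lyap_form 0 (Y T) (V T)) by (unfold lyap_form; congruence).
  pose proof (Hform0 (Y T) (V T)). pose proof (exp_ge1 (K * s) ltac:(apply Rmult_le_pos; lra)).
  pose proof (pow2_sum_ge0 y0 v0). pose proof (exp_pos (- (K * T))).
  assert (Hinv : exp (- (K * T)) * exp (K * T) = 1) by (rewrite <- exp_plus, Rplus_opp_l; apply exp_0).
  assert (exp (- (K * T)) * (y0 ^ 2 + v0 ^ 2) <= Y T ^ 2 + V T ^ 2).
  { replace (Y T ^ 2 + V T ^ 2) with (exp (- (K * T)) * ((Y T ^ 2 + V T ^ 2) * exp (K * T)))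
      by (rewrite <- Rmult_assoc, (Rmult_comm (exp _)), Rmult_assoc, Hinv; ring).
    apply Rmult_le_compat_l; nra. }
  rewrite HY0, HV0 in Hdecr. nra.
Qed.

Definition lyapV t y v := lyap_form (pmod T t) y v.

Lemma pmod_in s : 0 <= pmod T s <= T.
Proof. pose proof (pmod_bounds T s T_pos). lra. Qed.

Lemma lin_coef_pmod s : lin_coef (pmod T s) = lin_coef s.
Proof. apply periodic_pmod, lin_coef_periodic. Qed.

Lemma hre_pmod_derive s :
  is_derive (fun u => hre11 (pmod T u)) s (-1 + 2 * lin_coef s * hre12 (pmod T s)) /\
  is_derive (fun u => hre12 (pmod T u)) s
    (- hre11 (pmod T s) + alpha * mu * hre12 (pmod T s) + lin_coef s * hre22 (pmod T s)) /\
  is_derive (fun u => hre22 (pmod T u)) s (-1 - 2 * hre12 (pmod T s) + 2 * (alpha * mu) * hre22 (pmod T s)).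
Proof.
  destruct hre_periodic as [E1 [E2 E3]].
  assert (Ec : lin_coef 0 = lin_coef T) by (rewrite <- (Rplus_0_l T), lin_coef_periodic; reflexivity).
  rewrite <- (lin_coef_pmod s). split; [|split].
  - apply (is_derive_periodic_extension T hre11 (fun t => -1 + 2 * lin_coef t * hre12 t));
      [exact T_pos|apply hre_derive|exact E1|congruence].
  - apply (is_derive_periodic_extension T hre12
             (fun t => - hre11 t + alpha * mu * hre12 t + lin_coef t * hre22 t));
      [exact T_pos|apply hre_derive|exact E2|congruence].
  - apply (is_derive_periodic_extension T hre22 (fun t => -1 - 2 * hre12 t + 2 * (alpha * mu) * hre22 t));
      [exact T_pos|apply hre_derive|exact E3|congruence].
Qed.

Lemma lyapV_derive (Y V : R -> R) u w : is_derive Y u (V u) -> is_derive V u w ->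
  is_derive (fun s => lyapV s (Y s) (V s)) u
    (- (Y u ^ 2 + V u ^ 2) + 2 * (hre12 (pmod T u) * Y u + hre22 (pmod T u) * V u)
                              * (w + lin_coef u * Y u + alpha * mu * V u)).
Proof.
  intros DY DV. destruct (hre_pmod_derive u) as [D1 [D2 D3]].
  pose proof (is_derive_quadratic_form _ _ _ Y V u _ _ _ _ D1 D2 D3 DY DV) as K.
  unfold lyapV, lyap_form. match type of K with is_derive _ _ ?d => replace (- _ + _) with d by ring end.
  exact K.
Qed.

Variables (a k p rho eta Q : R) (q g : R -> R).
Hypothesis q_bound : forall t, 0 <= t -> Rabs (q t) <= Q.
Hypothesis coef_close : forall t, 0 <= t -> Rabs (alpha * mu - a) + Rabs (lin_coef t - k * q t) <= eta.
Hypothesis eta_small : 2 * hmax T H * eta < 1.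
Hypothesis p_ge0 : 0 <= p.
Hypothesis rho_pos : 0 < rho.
Hypothesis g_quadratic : forall xi, Rabs xi <= rho -> Rabs (g xi - k * xi) <= p * xi ^ 2.

Definition decay_margin := (1 - 2 * hmax T H * eta) / 2.
Definition decay_rate := decay_margin / hmax T H.
Definition stable_radius := Rmin rho (decay_margin / (2 * hmax T H * Q * p + 1)).

Let Q_ge0 : 0 <= Q.
Proof. pose proof (q_bound 0 (Rle_refl 0)). pose proof (Rabs_pos (q 0)). lra. Qed.

Lemma decay_margin_pos : 0 < decay_margin.
Proof. unfold decay_margin. lra. Qed.

Lemma decay_rate_pos : 0 < decay_rate.
Proof. apply Rdiv_lt_0_compat; [apply decay_margin_pos|exact hmax_pos]. Qed.

Lemma stable_radius_pos : 0 < stable_radius.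
Proof.
  pose proof decay_margin_pos. pose proof (Rmult_le_pos _ _ (Rmult_le_pos _ _ (Rlt_le _ _ hmax_pos) Q_ge0) p_ge0).
  apply Rmin_glb_lt; [exact rho_pos|apply Rdiv_lt_0_compat; lra].
Qed.

Lemma stable_radius_le_rho : stable_radius <= rho.
Proof. apply Rmin_l. Qed.

Lemma perturbation_bound u y v N : 0 <= u -> Rabs y <= N -> Rabs v <= N -> N <= rho ->
  Rabs ((- a * v - q u * g y) + lin_coef u * y + alpha * mu * v) <= eta * N + Q * p * N ^ 2.
Proof.
  intros Hu Hy Hv HN.
  replace ((- a * v - q u * g y) + lin_coef u * y + alpha * mu * v)
    with ((alpha * mu - a) * v + (lin_coef u - k * q u) * y + (- q u) * (g y - k * y)) by ring.
  pose proof (Rabs_triang ((alpha * mu - a) * v + (lin_coef u - k * q u) * y) ((- q u) * (g y - k * y))).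
  pose proof (Rabs_triang ((alpha * mu - a) * v) ((lin_coef u - k * q u) * y)).
  rewrite !Rabs_mult, Rabs_Ropp in *.
  pose proof (coef_close u Hu). pose proof (q_bound u Hu). pose proof (g_quadratic y ltac:(lra)).
  pose proof (Rabs_pos (alpha * mu - a)). pose proof (Rabs_pos (lin_coef u - k * q u)).
  pose proof (Rabs_pos (q u)). pose proof (Rabs_pos (g y - k * y)).
  pose proof (Rabs_pos y).
  assert (y ^ 2 <= N ^ 2) by (rewrite <- !Rsqr_pow2, Rsqr_abs; apply Rsqr_incr_1; lra).
  assert (Rabs (q u) * Rabs (g y - k * y) <= Q * (p * N ^ 2)) by (apply Rmult_le_compat; nra).
  nra.
Qed.

(* Inside the ball of radius [stable_radius] the quadratic remainder costs at most
   [decay_margin |z|^2], so [V] decays at the rate [decay_rate]. *)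
Lemma lyapV_decay_in_ball u y v : 0 <= u -> sqrt (y ^ 2 + v ^ 2) <= stable_radius ->
  - (y ^ 2 + v ^ 2)
  + 2 * (hre12 (pmod T u) * y + hre22 (pmod T u) * v) * ((- a * v - q u * g y) + lin_coef u * y + alpha * mu * v)
  + decay_rate * lyapV u y v <= 0.
Proof.
  intros Hu HN. set (N := sqrt (y ^ 2 + v ^ 2)) in *.
  set (E := (- a * v - q u * g y) + lin_coef u * y + alpha * mu * v).
  set (h := hmax T H). set (m := decay_margin).
  assert (Hh : 0 < h) by exact hmax_pos.
  assert (HN2 : N ^ 2 = y ^ 2 + v ^ 2) by (apply pow2_sqrt, pow2_sum_ge0).
  assert (HN0 : 0 <= N) by apply sqrt_pos.
  pose proof stable_radius_le_rho. pose proof (pow2_ge_0 y). pose proof (pow2_ge_0 v).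
  assert (HE : Rabs E <= eta * N + Q * p * N ^ 2).
  { apply perturbation_bound; [exact Hu| | |lra]; apply Rabs_le_of_pow2_le; lra. }
  pose proof (hre_cross_le (pmod T u) y v (pmod_in u)) as HB. fold N h in HB.
  assert (Hcubic : 2 * h * Q * p * N <= m).
  { assert (Hr : N <= m / (2 * h * Q * p + 1)) by (eapply Rle_trans; [exact HN|apply Rmin_r]).
    assert (HX : 0 <= 2 * h * Q * p)
      by (pose proof Q_ge0; apply Rmult_le_pos; [apply Rmult_le_pos|]; nra).
    assert (Hm : 0 < m) by apply decay_margin_pos.
    set (X := 2 * h * Q * p) in *.
    apply (Rmult_le_compat_l X) in Hr; [|lra].
    assert (X * (m / (X + 1)) <= m) by (apply (Rmult_le_reg_r (X + 1)); [lra|]; field_simplify; nra).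
    lra. }
  assert (Hform : decay_rate * lyapV u y v <= m * N ^ 2).
  { pose proof (lyap_form_le (pmod T u) y v (pmod_in u)) as HU. fold h in HU. rewrite <- HN2 in HU.
    unfold decay_rate. fold m h. replace (m * N ^ 2) with (m / h * (h * N ^ 2)) by (field; lra).
    apply Rmult_le_compat_l; [left; apply Rdiv_lt_0_compat; [apply decay_margin_pos|exact Hh]|].
    exact HU. }
  assert (Hprod : Rabs (2 * (hre12 (pmod T u) * y + hre22 (pmod T u) * v) * E)
                  <= 2 * (h * N) * (eta * N + Q * p * N ^ 2)).
  { rewrite !Rabs_mult, (Rabs_pos_eq 2) by lra.
    pose proof (Rabs_pos (hre12 (pmod T u) * y + hre22 (pmod T u) * v)).
    apply Rmult_le_compat; [lra|apply Rabs_pos|lra|exact HE]. }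
  pose proof (Rle_abs (2 * (hre12 (pmod T u) * y + hre22 (pmod T u) * v) * E)).
  assert (Heta : 2 * h * eta = 1 - 2 * m) by (unfold m, decay_margin; fold h; field).
  rewrite <- HN2. nra.
Qed.

Definition weighted_lyapV t0 (y v : R -> R) u := lyapV u (y u) (v u) * exp (decay_rate * (u - t0)).

Variable lam : R.
Hypothesis lam_pos : 0 < lam.
Hypothesis lam_coercive : forall s y v, 0 <= s <= T -> lam * (y ^ 2 + v ^ 2) <= lyap_form s y v.

Lemma lyapV_coercive u y v : lam * (y ^ 2 + v ^ 2) <= lyapV u y v.
Proof. apply lam_coercive, pmod_in. Qed.

Lemma weighted_lyapV_small t0 (y v : R -> R) u r : t0 <= u ->
  weighted_lyapV t0 y v u < lam * r ^ 2 -> y u ^ 2 + v u ^ 2 < r ^ 2.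
Proof.
  intros Hu Hw. unfold weighted_lyapV in Hw.
  pose proof (exp_ge1 (decay_rate * (u - t0)) ltac:(pose proof decay_rate_pos; apply Rmult_le_pos; lra)).
  pose proof (lyapV_coercive u (y u) (v u)). pose proof (pow2_sum_ge0 (y u) (v u)).
  assert (0 <= lyapV u (y u) (v u)) by nra.
  assert (lyapV u (y u) (v u) <= lyapV u (y u) (v u) * exp (decay_rate * (u - t0))) by nra.
  apply (Rmult_lt_reg_l lam); [exact lam_pos|lra].
Qed.

Lemma weighted_lyapV_nonincreasing t0 t1 y v r t :
  0 <= t0 -> 0 < r <= stable_radius -> is_sol a q g t0 t1 y v ->
  weighted_lyapV t0 y v t0 < lam * r ^ 2 -> t0 <= t -> Rbar_lt t t1 ->
  weighted_lyapV t0 y v t <= weighted_lyapV t0 y v t0.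
Proof.
  intros Ht0 Hr Hsol Hinit Ht Htt1.
  assert (Hin : forall u, t0 <= u <= t -> Rbar_lt u t1)
    by (intros u Hu; eapply Rbar_le_lt_trans; [|exact Htt1]; simpl; lra).
  set (dW := fun u =>
    ((- (y u ^ 2 + v u ^ 2) + 2 * (hre12 (pmod T u) * y u + hre22 (pmod T u) * v u)
        * ((- a * v u - q u * g (y u)) + lin_coef u * y u + alpha * mu * v u))
     + decay_rate * lyapV u (y u) (v u)) * exp (decay_rate * (u - t0))).
  assert (Hder : forall u, t0 <= u <= t -> is_derive (weighted_lyapV t0 y v) u (dW u)).
  { intros u Hu. destruct (Hsol u ltac:(lra) (Hin u Hu)) as [DY DV].
    apply (is_derive_mult_exp (fun s => lyapV s (y s) (v s))), lyapV_derive; assumption. }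
  apply (barrier_nonincreasing _ dW t0 t (lam * r ^ 2)); [lra| | | |exact Hinit].
  - intros x Hx. apply continuity_pt_of_continuous, continuousR_of_derive. eexists. apply Hder, Hx.
  - intros x Hx. apply Hder. lra.
  - intros x Hx Hsmall. pose proof (weighted_lyapV_small t0 y v x r ltac:(lra) Hsmall) as Hz.
    unfold dW. pose proof (exp_pos (decay_rate * (x - t0))).
    enough (- (y x ^ 2 + v x ^ 2) + 2 * (hre12 (pmod T x) * y x + hre22 (pmod T x) * v x)
              * ((- a * v x - q x * g (y x)) + lin_coef x * y x + alpha * mu * v x)
            + decay_rate * lyapV x (y x) (v x) <= 0) by nra.
    apply lyapV_decay_in_ball; [lra|].
    apply Rle_trans with r; [|lra].
    rewrite <- (sqrt_pow2 r) by lra. apply sqrt_le_1_alt. lra.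
Qed.

Lemma perturbed_solution_decay t0 t1 y v r :
  0 <= t0 -> 0 < r <= stable_radius -> is_sol a q g t0 t1 y v ->
  hmax T H * (y t0 ^ 2 + v t0 ^ 2) < lam * r ^ 2 ->
  forall t, t0 <= t -> Rbar_lt t t1 ->
  y t ^ 2 + v t ^ 2 < r ^ 2 /\
  lam * (y t ^ 2 + v t ^ 2) <= hmax T H * (y t0 ^ 2 + v t0 ^ 2) * exp (- (decay_rate * (t - t0))).
Proof.
  intros Ht0 Hr Hsol Hinit t Ht Htt1.
  assert (Hw0 : weighted_lyapV t0 y v t0 <= hmax T H * (y t0 ^ 2 + v t0 ^ 2)).
  { unfold weighted_lyapV. rewrite Rminus_diag, Rmult_0_r, exp_0, Rmult_1_r. apply lyap_form_le, pmod_in. }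
  pose proof (weighted_lyapV_nonincreasing t0 t1 y v r t Ht0 Hr Hsol ltac:(lra) Ht Htt1) as Hw.
  split; [apply (weighted_lyapV_small t0 y v t r Ht); lra|].
  pose proof (lyapV_coercive t (y t) (v t)) as Hco. pose proof (Rle_trans _ _ _ Hw Hw0) as Hw'.
  unfold weighted_lyapV in Hw'.
  pose proof (exp_pos (- (decay_rate * (t - t0)))).
  assert (Hinv : exp (decay_rate * (t - t0)) * exp (- (decay_rate * (t - t0))) = 1)
    by (rewrite <- exp_plus, Rplus_opp_r; apply exp_0).
  replace (lyapV t (y t) (v t))
    with (lyapV t (y t) (v t) * exp (decay_rate * (t - t0)) * exp (- (decay_rate * (t - t0)))) in Hco
    by (rewrite Rmult_assoc, Hinv; ring).
  assert (lyapV t (y t) (v t) * exp (decay_rate * (t - t0)) * exp (- (decay_rate * (t - t0)))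
          <= hmax T H * (y t0 ^ 2 + v t0 ^ 2) * exp (- (decay_rate * (t - t0))))
    by (apply Rmult_le_compat_r; lra).
  lra.
Qed.
End Lyapunov.

Definition clamp (rho x : R) := Rmax (- rho) (Rmin rho x).

Lemma clamp_in rho x : 0 < rho -> Rabs (clamp rho x) <= rho.
Proof. intros. apply Rabs_le. unfold clamp, Rmax, Rmin. repeat destruct Rle_dec; lra. Qed.

Lemma clamp_id rho x : Rabs x <= rho -> clamp rho x = x.
Proof. intros Hx. apply Rabs_le_between in Hx. unfold clamp, Rmax, Rmin. repeat destruct Rle_dec; lra. Qed.

Lemma clamp_lipschitz rho x y : 0 < rho -> Rabs (clamp rho x - clamp rho y) <= Rabs (x - y).
Proof. intros. unfold clamp, Rmax, Rmin. repeat destruct Rle_dec; unfold Rabs; repeat destruct Rcase_abs; lra. Qed.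

Lemma lipschitz_comp_clamp (g : R -> R) rho L : 0 < rho -> 0 <= L ->
  (forall x y, Rabs x <= rho -> Rabs y <= rho -> Rabs (g x - g y) <= L * Rabs (x - y)) ->
  forall x y, Rabs (g (clamp rho x) - g (clamp rho y)) <= L * Rabs (x - y).
Proof.
  intros Hrho HL Hg x y. eapply Rle_trans; [apply Hg; apply clamp_in, Hrho|].
  apply Rmult_le_compat_l; [exact HL|apply clamp_lipschitz, Hrho].
Qed.

Lemma lipschitz_on_interval_of_C1 (f : R -> R) rho : 0 < rho ->
  (forall x, ex_derive f x) -> (forall x, continuous (Derive f) x) ->
  exists L, 0 <= L /\ forall x y, Rabs x <= rho -> Rabs y <= rho -> Rabs (f x - f y) <= L * Rabs (x - y).
Proof.
  intros Hrho Hd Hdc.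
  destruct (continuity_ab_maj (fun x => Rabs (Derive f x)) (- rho) rho ltac:(lra)) as [xm [Hxm _]].
  { intros c _. apply continuity_pt_of_continuous. auto with continuityR. }
  exists (Rabs (Derive f xm)). split; [apply Rabs_pos|]. intros x y Hx Hy.
  destruct (MVT_gen f y x (Derive f)) as [c [Hc ->]].
  - intros z _. apply Derive_correct, Hd.
  - intros z _. apply continuity_pt_of_continuous, continuousR_of_derive, Hd.
  - rewrite Rabs_mult. apply Rmult_le_compat_r; [apply Rabs_pos|]. apply Hxm.
    apply Rabs_le_between in Hx. apply Rabs_le_between in Hy.
    unfold Rmin, Rmax in Hc. destruct Rle_dec; lra.
Qed.

Lemma Rmax0_lipschitz x y : Rabs (Rmax 0 x - Rmax 0 y) <= 1 * Rabs (x - y).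
Proof. unfold Rmax. repeat destruct Rle_dec; unfold Rabs; repeat destruct Rcase_abs; lra. Qed.

Lemma continuous_comp_Rmax0 (d : R -> R) :
  (forall t, 0 <= t -> filterlim d (within (fun s => 0 <= s) (locally t)) (locally (d t))) ->
  forall t, continuous (fun u => d (Rmax 0 u)) t.
Proof.
  intros Hc t. apply continuous_of_continuity_pt, continuity_pt_locally. intros eps.
  destruct (Hc (Rmax 0 t) (Rmax_l _ _) (fun z => Rabs (z - d (Rmax 0 t)) < eps)) as [del Hdel].
  { exists eps. intros z Hz. exact Hz. }
  exists del. intros u Hu. change (Rabs (u - t) < del) in Hu. apply Hdel; [|apply Rmax_l].
  change (Rabs (Rmax 0 u - Rmax 0 t) < del). pose proof (Rmax0_lipschitz u t). lra.
Qed.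

Lemma snorm_lt y v r : 0 < r -> y ^ 2 + v ^ 2 < r ^ 2 -> snorm y v < r.
Proof.
  intros Hr Hs. unfold snorm. rewrite <- (sqrt_pow2 r) by lra.
  apply sqrt_lt_1_alt. split; [apply pow2_sum_ge0|exact Hs].
Qed.

Lemma snorm_lt_scaled h lam r y v : 0 < h -> 0 < lam -> 0 <= r ->
  snorm y v < sqrt (lam / h) * r -> h * (y ^ 2 + v ^ 2) < lam * r ^ 2.
Proof.
  intros Hh Hl Hr Hs. unfold snorm in Hs. pose proof (sqrt_pos (y ^ 2 + v ^ 2)).
  assert (Hsq : sqrt (y ^ 2 + v ^ 2) ^ 2 < (sqrt (lam / h) * r) ^ 2) by nra.
  rewrite pow2_sqrt, Rpow_mult_distr, pow2_sqrt in Hsq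
    by (apply pow2_sum_ge0 || (left; apply Rdiv_lt_0_compat; assumption)).
  apply (Rmult_lt_compat_l h) in Hsq; [|exact Hh].
  replace (h * (lam / h * r ^ 2)) with (lam * r ^ 2) in Hsq by (field; lra). exact Hsq.
Qed.

Lemma is_lim_sqrt_exp_bound (F : R -> R) A c t0 : 0 < c ->
  (forall t, t0 <= t -> 0 <= F t <= A * exp (- (c * (t - t0)))) ->
  is_lim (fun t => sqrt (F t)) p_infty 0.
Proof.
  intros Hc HF. apply is_lim_spec. intros eps. simpl. pose proof (cond_pos eps) as He.
  set (A' := Rabs A + 1).
  assert (HA' : 0 < A') by (pose proof (Rabs_pos A); unfold A'; lra).
  assert (Hq : 0 < eps ^ 2 / A') by (apply Rdiv_lt_0_compat; [apply pow_lt|]; lra).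
  exists (Rmax t0 (t0 - ln (eps ^ 2 / A') / c)). intros t Ht.
  pose proof (Rle_lt_trans _ _ _ (Rmax_l _ _) Ht) as Ht0.
  pose proof (Rle_lt_trans _ _ _ (Rmax_r _ _) Ht) as Htl.
  destruct (HF t ltac:(lra)) as [HF0 HFb].
  assert (Hexp : exp (- (c * (t - t0))) < eps ^ 2 / A').
  { rewrite <- (exp_ln (eps ^ 2 / A')) by exact Hq. apply exp_increasing.
    apply (Rmult_lt_compat_l c) in Htl; [|exact Hc].
    replace (c * (t0 - ln (eps ^ 2 / A') / c)) with (c * t0 - ln (eps ^ 2 / A')) in Htl by (field; lra).
    lra. }
  assert (HFe : F t < eps ^ 2).
  { pose proof (exp_pos (- (c * (t - t0)))). pose proof (Rle_abs A).
    apply (Rmult_lt_compat_l A') in Hexp; [|exact HA'].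
    replace (A' * (eps ^ 2 / A')) with (eps ^ 2) in Hexp by (field; lra).
    unfold A' in Hexp. nra. }
  rewrite Rminus_0_r, Rabs_pos_eq by apply sqrt_pos.
  rewrite <- (sqrt_pow2 eps) by lra. apply sqrt_lt_1_alt. lra.
Qed.

(** * Asymptotic stability of the perturbed equation *)

Section Stability.
Variables (T alpha btil mu : R) (phitil : R -> R) (H : R -> M2).
Variables (a k p rho eta Q L lam : R) (q g : R -> R).
Hypothesis T_pos : 0 < T.
Hypothesis phitil_per : forall t, phitil (t + T) = phitil t.
Hypothesis H_lyap : lyap_periodic_sol T alpha btil phitil mu H.
Hypothesis hmax_pos : 0 < hmax T H.
Hypothesis q_bound : forall t, 0 <= t -> Rabs (q t) <= Q.
Hypothesis q_cont : forall t, continuous (fun s => q (Rmax 0 s)) t.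
Hypothesis coef_close : forall t, 0 <= t -> Rabs (alpha * mu - a) + Rabs (lin_coef btil mu phitil t - k * q t) <= eta.
Hypothesis eta_small : 2 * hmax T H * eta < 1.
Hypothesis p_ge0 : 0 <= p.
Hypothesis rho_pos : 0 < rho.
Hypothesis g_quadratic : forall xi, Rabs xi <= rho -> Rabs (g xi - k * xi) <= p * xi ^ 2.
Hypothesis L_ge0 : 0 <= L.
Hypothesis g_lip : forall x y, Rabs x <= rho -> Rabs y <= rho -> Rabs (g x - g y) <= L * Rabs (x - y).
Hypothesis lam_pos : 0 < lam.
Hypothesis lam_coercive : forall s y v, 0 <= s <= T -> lam * (y ^ 2 + v ^ 2) <= lyap_form H s y v.

Let radius := stable_radius T H p rho eta Q.

Let decay (G : R -> R) := perturbed_solution_decay T alpha btil mu phitil H T_pos phitil_per H_lyap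
  hmax_pos a k p rho eta Q q G q_bound coef_close eta_small p_ge0.

Let radius_pos : 0 < radius.
Proof. eapply stable_radius_pos; eassumption. Qed.

(* A solution of the equation with [g] truncated outside [[-rho, rho]] that starts in the
   ball never leaves it, hence also solves the original equation. *)
Lemma perturbed_solution_exists t0 y0 v0 r :
  0 <= t0 -> 0 < r <= radius -> hmax T H * (y0 ^ 2 + v0 ^ 2) < lam * r ^ 2 ->
  exists y v, is_sol a q g t0 p_infty y v /\ y t0 = y0 /\ v t0 = v0.
Proof.
  intros Ht0 Hr Hinit. set (gc := fun x => g (clamp rho x)).
  assert (Hgc : forall xi, Rabs xi <= rho -> Rabs (gc xi - k * xi) <= p * xi ^ 2)
    by (intros xi Hxi; unfold gc; rewrite clamp_id by exact Hxi; auto).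
  assert (Hqb : forall t, Rabs (q (Rmax 0 t)) <= Q) by (intros t; apply q_bound, Rmax_l).
  destruct (picard_global_solution a Q L t0 y0 v0 (fun s => q (Rmax 0 s)) gc q_cont Hqb
              (lipschitz_comp_clamp g rho L rho_pos L_ge0 g_lip)) as [Y [V [HD [HY0 HV0]]]].
  assert (Hsolc : is_sol a q gc t0 p_infty Y V).
  { intros t Ht _. replace (q t) with (q (Rmax 0 t)) by (rewrite Rmax_right; lra). apply HD. }
  exists Y, V. split; [|split; assumption]. intros t Ht _.
  destruct (Hsolc t Ht I) as [DY DV]. split; [exact DY|].
  destruct (decay gc Hgc lam lam_pos lam_coercive t0 p_infty Y V r Ht0 Hr Hsolc
              ltac:(rewrite HY0, HV0; exact Hinit) t Ht I) as [Hin _].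
  assert (HY : Rabs (Y t) <= rho).
  { apply Rabs_le_of_pow2_le; [|lra]. pose proof (pow2_ge_0 (V t)).
    pose proof (stable_radius_le_rho T H p rho eta Q) as Hrho. fold radius in Hrho.
    assert (r ^ 2 <= rho ^ 2) by (apply pow_incr; lra). lra. }
  unfold gc in DV. rewrite clamp_id in DV by exact HY. exact DV.
Qed.

Let init_scale := sqrt (lam / hmax T H).

Let init_scale_pos : 0 < init_scale.
Proof. apply sqrt_lt_R0, Rdiv_lt_0_compat; assumption. Qed.

Lemma perturbed_zero_stable : zero_stable a q g.
Proof.
  intros t0 Ht0 eps Heps. pose proof init_scale_pos. pose proof radius_pos. set (r := Rmin radius eps).
  assert (Hr : 0 < r <= radius) by (split; [apply Rmin_glb_lt|apply Rmin_l]; lra).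
  exists (init_scale * r). split; [apply Rmult_lt_0_compat; lra|split].
  - intros y0 v0 Hs. apply (perturbed_solution_exists t0 y0 v0 r Ht0 Hr).
    apply snorm_lt_scaled; [exact hmax_pos|exact lam_pos|lra|exact Hs].
  - intros t1 y v Hsol Hs t Ht Htt1.
    destruct (decay g g_quadratic lam lam_pos lam_coercive t0 t1 y v r Ht0 Hr Hsol
                (snorm_lt_scaled _ _ r _ _ hmax_pos lam_pos ltac:(lra) Hs) t Ht Htt1) as [Hin _].
    apply snorm_lt; [lra|]. assert (r ^ 2 <= eps ^ 2) by (apply pow_incr; split; [lra|apply Rmin_r]).
    lra.
Qed.

Lemma perturbed_zero_attractive : zero_attractive a q g.
Proof.
  intros t0 Ht0. pose proof init_scale_pos. pose proof radius_pos.
  exists (init_scale * radius). split; [apply Rmult_lt_0_compat; lra|]. intros y v Hsol Hs.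
  pose proof (snorm_lt_scaled _ _ radius _ _ hmax_pos lam_pos ltac:(lra) Hs) as Hinit.
  apply (is_lim_sqrt_exp_bound _ (hmax T H * (y t0 ^ 2 + v t0 ^ 2) / lam) (decay_rate T H eta) t0).
  - eapply decay_rate_pos; eassumption.
  - intros t Ht. split; [apply pow2_sum_ge0|].
    destruct (decay g g_quadratic lam lam_pos lam_coercive t0 p_infty y v radius Ht0
                (conj radius_pos (Rle_refl _)) Hsol Hinit t Ht I) as [_ Hb].
    apply (Rmult_le_reg_l lam); [exact lam_pos|]. unfold Rdiv.
    replace (lam * (hmax T H * (y t0 ^ 2 + v t0 ^ 2) * / lam * exp (- (decay_rate T H eta * (t - t0)))))
      with (hmax T H * (y t0 ^ 2 + v t0 ^ 2) * exp (- (decay_rate T H eta * (t - t0)))) by (field; lra).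
    exact Hb.
Qed.
End Stability.

(* With the junk value [1 / 0 = 0], the smallness hypotheses also force [h > 0]. *)
Lemma pos_of_lt_inv8 x h : 0 <= x -> x < 1 / (8 * h) -> 0 < h.
Proof.
  intros Hx Hlt. destruct (Rlt_le_dec 0 h) as [|Hh]; [assumption|exfalso].
  destruct Hh as [Hh|Hh0].
  - assert (/ (8 * h) < 0) by (apply Rinv_lt_0_compat; lra). unfold Rdiv in Hlt. lra.
  - rewrite Hh0, Rmult_0_r, Rdiv_0_r in Hlt. lra.
Qed.

Lemma sup_abs_mul_ub (d : R -> R) c : (exists M, forall t, 0 <= t -> Rabs (d t) <= M) ->
  forall t, 0 <= t -> Rabs (d t * c) <= real (Lub_Rbar (fun r => exists t, 0 <= t /\ r = Rabs (d t * c))).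
Proof.
  intros [M HM] t Ht. apply real_Lub_Rbar_ub; [exists t; auto|].
  exists (M * Rabs c). intros r [u [Hu ->]]. rewrite Rabs_mult.
  apply Rmult_le_compat_r; [apply Rabs_pos|auto].
Qed.

Lemma lt_inv8_sum x y h : 0 < h -> x < 1 / (8 * h) -> y < 1 / (8 * h) -> 2 * h * (x + y) < 1.
Proof.
  intros Hh Hx Hy. apply (Rmult_lt_compat_l h) in Hx, Hy; [|exact Hh..].
  replace (h * (1 / (8 * h))) with (1 / 8) in Hx, Hy by (field; lra). nra.
Qed.

Lemma perturbed_coef_close (alpha beta dalpha dbeta mu k S : R) (phi dphi : R -> R) t :
  0 < mu -> Rabs (dphi t * k) <= S ->
  Rabs (alpha * mu - (alpha + dalpha) * mu)
  + Rabs (lin_coef (beta * k) mu (fun t => phi t * k) t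
          - k * ((beta + dbeta) * mu ^ 2 + mu * (phi t + dphi t)))
  <= mu * (Rabs (dbeta * k) * mu + Rabs dalpha) + mu * S.
Proof.
  intros Hmu HS. unfold lin_coef.
  replace (alpha * mu - (alpha + dalpha) * mu) with (mu * (- dalpha)) by ring.
  replace (beta * k * mu ^ 2 + mu * (phi t * k) - k * ((beta + dbeta) * mu ^ 2 + mu * (phi t + dphi t)))
    with (- (dbeta * k * mu ^ 2 + mu * (dphi t * k))) by ring.
  rewrite Rabs_Ropp, Rabs_mult, Rabs_Ropp, (Rabs_pos_eq mu) by lra.
  pose proof (Rabs_triang (dbeta * k * mu ^ 2) (mu * (dphi t * k))) as Ht.
  rewrite (Rabs_mult (dbeta * k)), (Rabs_mult mu), (Rabs_pos_eq mu), (Rabs_pos_eq (mu ^ 2)) in Ht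
    by (try apply pow_le; lra).
  assert (mu * Rabs (dphi t * k) <= mu * S) by (apply Rmult_le_compat_l; lra).
  lra.
Qed.

Lemma perturbed_coef_bound (beta dbeta mu B M : R) (phi dphi : R -> R) t : 0 < mu ->
  Rabs (phi t) <= B -> Rabs (dphi t) <= M ->
  Rabs ((beta + dbeta) * mu ^ 2 + mu * (phi t + dphi t)) <= Rabs (beta + dbeta) * mu ^ 2 + mu * (B + M).
Proof.
  intros Hmu HB HM. eapply Rle_trans; [apply Rabs_triang|].
  rewrite !Rabs_mult, (Rabs_pos_eq mu), (Rabs_pos_eq (mu ^ 2)) by (try apply pow_le; lra).
  apply Rplus_le_compat_l, Rmult_le_compat_l; [lra|].
  pose proof (Rabs_triang (phi t) (dphi t)). lra.
Qed.

Lemma perturbed_coef_continuous (c mu : R) (phi dphi : R -> R) : (forall t, continuous phi t) ->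
  (forall t, 0 <= t -> filterlim dphi (within (fun s => 0 <= s) (locally t)) (locally (dphi t))) ->
  forall t, continuous (fun s => c + mu * (phi (Rmax 0 s) + dphi (Rmax 0 s))) t.
Proof.
  intros Hphi Hdphi t. pose proof (continuous_comp_Rmax0 dphi Hdphi t).
  assert (continuous (fun s => phi (Rmax 0 s)) t)
    by (apply continuousR_comp; [exact (continuous_lipschitz _ 1 Rmax0_lipschitz t)|auto]).
  auto with continuityR.
Qed.

Theorem mainTheorem8
  (T alpha beta : R) (phi f : R -> R) (mu0 mu p rho dalpha dbeta : R) (dphi : R -> R)
  (H : R -> M2)
  (hT : 0 < T) (halpha : 0 < alpha) (hbeta : 0 < beta)
  (hphi_cont : forall t, continuous phi t)
  (hphi_per : forall t, phi (t + T) = phi t)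
  (hphi_mean : RInt phi 0 T = 0)
  (hf_smooth : forall n x, ex_derive_n f n x)
  (hf0 : f 0 = 0) (hf'0 : Derive f 0 < 0)
  (hcond : (1 / T) * RInt (fun tau => (RInt (fun s => phi s * Derive f 0) 0 tau) ^ 2) 0 T
           > ((1 / T) * RInt (fun tau => tau * (phi tau * Derive f 0)) 0 T) ^ 2
             - beta * Derive f 0)
  (hmu0 : 0 < mu0)
  (hlin : forall m, 0 < m <= mu0 ->
     zero_asympt_stable (alpha * m)
       (fun t => beta * Derive f 0 * m ^ 2 + m * (phi t * Derive f 0)) (fun x => x))
  (hmu : 0 < mu <= mu0)
  (hH : lyap_periodic_sol T alpha (beta * Derive f 0) (fun t => phi t * Derive f 0) mu H)
  (hdphi_cont : forall t, 0 <= t ->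
     filterlim dphi (within (fun s => 0 <= s) (locally t)) (locally (dphi t)))
  (hdphi_bdd : exists M, forall t, 0 <= t -> Rabs (dphi t) <= M)
  (hp : 0 <= p) (hrho : 0 < rho)
  (hf_quad : forall xi, Rabs xi <= rho -> Rabs (f xi - Derive f 0 * xi) <= p * xi ^ 2)
  (hsmall1 : mu * real (Lub_Rbar (fun r => exists t, 0 <= t /\ r = Rabs (dphi t * Derive f 0)))
             < 1 / (8 * hmax T H))
  (hsmall2 : mu * (Rabs (dbeta * Derive f 0) * mu + Rabs dalpha) < 1 / (8 * hmax T H)) :
  zero_asympt_stable ((alpha + dalpha) * mu)
    (fun t => (beta + dbeta) * mu ^ 2 + mu * (phi t + dphi t)) f.
Proof.
  (* [hcond], [hlin] and [hphi_mean] only guarantee that [H] exists, which [hH] provides. *)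
  destruct hmu as [hmu_pos _].
  set (k := Derive f 0) in *.
  set (S := real (Lub_Rbar (fun r => exists t, 0 <= t /\ r = Rabs (dphi t * k)))) in *.
  pose proof (sup_abs_mul_ub dphi k hdphi_bdd) as HS.
  assert (Hh : 0 < hmax T H).
  { apply (pos_of_lt_inv8 (mu * (Rabs (dbeta * k) * mu + Rabs dalpha))); [|exact hsmall2].
    pose proof (Rabs_pos (dbeta * k)). pose proof (Rabs_pos dalpha). nra. }
  assert (Hper : forall t, phi (t + T) * k = phi t * k) by (intros; rewrite hphi_per; reflexivity).
  destruct (lyap_form_coercive T alpha (beta * k) mu (fun t => phi t * k) H hT
              ltac:(auto with continuityR) Hper hH) as [lam [Hlam Hco]].
  destruct (periodic_continuous_bounded phi T hT hphi_cont hphi_per) as [B HB].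
  destruct hdphi_bdd as [M HM].
  destruct (lipschitz_on_interval_of_C1 f rho hrho (hf_smooth 1%nat)
              (fun x => continuousR_of_derive _ x (hf_smooth 2%nat x))) as [L [HL Hlip]].
  set (eta := mu * (Rabs (dbeta * k) * mu + Rabs dalpha) + mu * S).
  set (Q := Rabs (beta + dbeta) * mu ^ 2 + mu * (B + M)).
  assert (Heta : 2 * hmax T H * eta < 1) by exact (lt_inv8_sum _ _ _ Hh hsmall2 hsmall1).
  assert (Hq : forall t, 0 <= t -> Rabs ((beta + dbeta) * mu ^ 2 + mu * (phi t + dphi t)) <= Q)
    by (intros; apply perturbed_coef_bound; auto).
  assert (Hclose : forall t, 0 <= t ->
    Rabs (alpha * mu - (alpha + dalpha) * mu)
    + Rabs (lin_coef (beta * k) mu (fun t => phi t * k) t - k * ((beta + dbeta) * mu ^ 2 + mu * (phi t + dphi t)))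
    <= eta) by (intros; apply perturbed_coef_close; auto).
  split.
  - apply (perturbed_zero_stable T alpha (beta * k) mu (fun t => phi t * k) H _ k p rho eta Q L lam);
      auto using perturbed_coef_continuous.
  - apply (perturbed_zero_attractive T alpha (beta * k) mu (fun t => phi t * k) H _ k p rho eta Q lam);
      auto.
Qed.
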